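(* Let $\phi:\mathbb D\to\mathbb D$ be analytic with $\phi(0)=0$ and $|\phi'(0)|<1$. Then there exists $\rho>0$ such that for all integers $m,n\ge0$, $$|\widehat{\phi^n}(m)|\le\exp\Big(-\tfrac12\big[(1+\rho)n-m\big]\Big),$$ where $\widehat{\phi^n}(m)$ denotes the $m$-th Taylor coefficient of $\phi^n$ at $0$.
   Context: $\mathbb D$ is the open unit disk; $\phi^n$ is the $n$-th power (pointwise product) of $\phi$. *)

From Stdlib Require Import Reals.
From Coquelicot Require Export Coquelicot.
From Stdlib Require Import Factorial.
Open Scope R_scope.

Definition cderiv_at (f : C -> C) (z l : C) : Prop :=
  @is_derive C_AbsRing C_NormedModule f z l.

Definition in_disk (z : C) : Prop := Cmod z < 1.

Definition holo_on_disk (f : C -> C) : Prop :=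
  forall z, in_disk z -> exists l, cderiv_at f z l.

Fixpoint cpow (w : C) (n : nat) : C :=
  match n with O => RtoC 1 | S k => Cmult w (cpow w k) end.

Definition is_taylor_coef (f : C -> C) (m : nat) (c : C) : Prop :=
  exists g : nat -> C -> C,
    g O = f /\
    (forall k z, in_disk z -> cderiv_at (g k) z (g (S k) z)) /\
    c = Cdiv (g m (RtoC 0)) (RtoC (INR (fact m))).

(* Let r0 = exp(-1/2).  The proof has three ingredients.
   1. Cauchy's estimate: if g_0 = f, g_1, g_2, ... is a tower of complex
      derivatives on the disk and |f| <= B on the circle |z| = r, then
      |g_m(0)/m!| <= B / r^m.  It is proved with the circle moments
      M_j(t) = \int_{-pi}^{pi} e^{i(j-m)th} g_j(t e^{ith}) dth, which satisfy
      M_j' = M_{j+1} and t M_1 = m M_0, hence M_0(t) = c t^m and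
      M_m(0) = 2 pi g_m(0) = m! c.
   2. A strict Schwarz lemma: |phi(z)| < |z| for 0 < |z| < 1.  It is proved
      for the quotient G = phi^n / z^n (n >= 1), using the mean value
      property on circles and a maximum principle along rays; the needed
      regularity of G comes from the derivative tower of phi^n that every
      Taylor coefficient hypothesis provides.
   3. By compactness |phi| <= q < r0 on |z| = r0, so every coefficient of
      phi^n is at most q^n / r0^m = exp(-(1/2)((1+rho) n - m)) with
      rho = -2 ln q - 1 > 0.  (If no power phi^n with n >= 1 has a Taylor
      coefficient in the sense of [is_taylor_coef], only n = 0 matters and
      the bound is immediate.)
   The file develops, in order: complex derivatives and continuity, curves
   and complex-valued integrals, circle integrals and Cauchy's estimate, the
   mean value property and maximum principle, the Schwarz lemma, and the
   theorem. *)

From Stdlib Require Import Reals Lra Lia Psatz Factorial Classical ClassicalEpsilon.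
From Coquelicot Require Import Coquelicot.
Open Scope R_scope.

(** * Complex derivatives in epsilon-delta form *)

(* [cderiv_at] and the product rule of Coquelicot use two different normed
   module structures on C; the epsilon-delta form bridges them. *)
Definition cderiv_eps (f : C -> C) (z l : C) : Prop :=
  forall eps, 0 < eps -> exists delta, 0 < delta /\
    forall w, Cmod (w - z) < delta ->
      Cmod (f w - f z - l * (w - z)) <= eps * Cmod (w - z).

Lemma cderiv_to_eps f z l : cderiv_at f z l -> cderiv_eps f z l.
Proof.
  intros [_ H] eps Heps.
  specialize (H z (fun P HP => HP)).
  destruct (H (mkposreal eps Heps)) as [d Hd].
  exists d; split; [apply cond_pos|].
  intros w Hw.
  specialize (Hd w (@norm_compat1 C_AbsRing (AbsRing_NormedModule C_AbsRing) z w d Hw)).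
  change (Cmod (f w - f z - (w - z) * l) <= eps * Cmod (w - z)) in Hd.
  rewrite (Cmult_comm l). exact Hd.
Qed.

Lemma cderiv_of_eps f z l : cderiv_eps f z l -> cderiv_at f z l.
Proof.
  intros H. split; [apply is_linear_scal_l|].
  intros x Hx.
  apply (@is_filter_lim_locally_unique C_AbsRing (AbsRing_NormedModule C_AbsRing)) in Hx.
  subst x. intros [eps Heps].
  destruct (H eps Heps) as [d [Hd0 Hd]].
  eapply filter_imp;
    [|apply (@locally_ball_norm C_AbsRing (AbsRing_NormedModule C_AbsRing) z (mkposreal d Hd0))].
  intros w Hw. simpl.
  change (Cmod (f w - f z - (w - z) * l) <= eps * Cmod (w - z)).
  rewrite (Cmult_comm (w - z) l). apply Hd. exact Hw.
Qed.

Lemma abs_deriv_to_eps f z l :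
  @is_derive C_AbsRing (AbsRing_NormedModule C_AbsRing) f z l -> cderiv_eps f z l.
Proof.
  intros [_ H] eps Heps.
  specialize (H z (fun P HP => HP)).
  destruct (H (mkposreal eps Heps)) as [d Hd].
  exists d; split; [apply cond_pos|].
  intros w Hw.
  specialize (Hd w (@norm_compat1 C_AbsRing (AbsRing_NormedModule C_AbsRing) z w d Hw)).
  change (Cmod (f w - f z - (w - z) * l) <= eps * Cmod (w - z)) in Hd.
  rewrite (Cmult_comm l). exact Hd.
Qed.

Lemma abs_deriv_of_eps f z l :
  cderiv_eps f z l -> @is_derive C_AbsRing (AbsRing_NormedModule C_AbsRing) f z l.
Proof.
  intros H. split; [apply is_linear_scal_l|].
  intros x Hx.
  apply (@is_filter_lim_locally_unique C_AbsRing (AbsRing_NormedModule C_AbsRing)) in Hx.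
  subst x. intros [eps Heps].
  destruct (H eps Heps) as [d [Hd0 Hd]].
  eapply filter_imp;
    [|apply (@locally_ball_norm C_AbsRing (AbsRing_NormedModule C_AbsRing) z (mkposreal d Hd0))].
  intros w Hw. simpl.
  change (Cmod (f w - f z - (w - z) * l) <= eps * Cmod (w - z)).
  rewrite (Cmult_comm (w - z) l). apply Hd. exact Hw.
Qed.

Lemma Cmod_sym (a b : C) : Cmod (a - b) = Cmod (b - a).
Proof. rewrite <- Cmod_opp. f_equal. ring. Qed.

Lemma Cmod_snd (z : C) : Rabs (snd z) <= Cmod z.
Proof.
  pose proof (Rmax_Cmod z). pose proof (Rmax_r (Rabs (fst z)) (Rabs (snd z))). lra.
Qed.

Lemma Cmod_le_sum (z : C) : Cmod z <= Rabs (fst z) + Rabs (snd z).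
Proof.
  destruct z as [x y]. unfold Cmod; simpl.
  pose proof (Rabs_pos x). pose proof (Rabs_pos y).
  apply Rsqr_incr_0_var; [|lra].
  rewrite Rsqr_sqrt by nra. unfold Rsqr.
  assert (Rabs x * Rabs x = x * x) by (rewrite <- Rabs_mult; apply Rabs_pos_eq; nra).
  assert (Rabs y * Rabs y = y * y) by (rewrite <- Rabs_mult; apply Rabs_pos_eq; nra).
  nra.
Qed.

Lemma Cmod_tri3 (a b : C) : Cmod a <= Cmod (a - b) + Cmod b.
Proof. replace a with ((a - b) + b)%C at 1 by ring. apply Cmod_triangle. Qed.

Lemma Cdot_le (v w : C) : fst v * fst w + snd v * snd w <= Cmod v * Cmod w.
Proof.
  destruct v as [a b], w as [c d]. unfold Cmod; simpl.
  replace (a * (a * 1) + b * (b * 1)) with (a * a + b * b) by ring.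
  replace (c * (c * 1) + d * (d * 1)) with (c * c + d * d) by ring.
  assert (Ha : 0 <= a * a + b * b) by nra.
  rewrite <- sqrt_mult_alt by exact Ha.
  destruct (Rle_or_lt (a * c + b * d) 0).
  { pose proof (sqrt_pos ((a * a + b * b) * (c * c + d * d))). lra. }
  apply Rsqr_incr_0_var; [|apply sqrt_pos].
  rewrite Rsqr_sqrt by nra. unfold Rsqr.
  pose proof (Rle_0_sqr (a * d - b * c)). unfold Rsqr in *. nra.
Qed.

Lemma Cmod_sqr (v : C) : Cmod v * Cmod v = fst v * fst v + snd v * snd v.
Proof.
  unfold Cmod. rewrite sqrt_sqrt; [ring|].
  pose proof (pow2_ge_0 (fst v)). pose proof (pow2_ge_0 (snd v)). lra.
Qed.

Definition ccont (f : C -> C) (z : C) : Prop :=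
  forall eps, 0 < eps -> exists d, 0 < d /\
    forall w, Cmod (w - z) < d -> Cmod (f w - f z) < eps.

Lemma cderiv_eps_ccont f z l : cderiv_eps f z l -> ccont f z.
Proof.
  intros H eps Heps. destruct (H 1 Rlt_0_1) as [d [Hd0 Hd]].
  pose proof (Cmod_ge_0 l).
  exists (Rmin d (eps / (Cmod l + 2))). split.
  { apply Rmin_pos; auto. apply Rdiv_lt_0_compat; lra. }
  intros w Hw.
  assert (Hw1 : Cmod (w - z) < d) by (eapply Rlt_le_trans; [exact Hw| apply Rmin_l]).
  assert (Hw2 : Cmod (w - z) < eps / (Cmod l + 2))
    by (eapply Rlt_le_trans; [exact Hw| apply Rmin_r]).
  specialize (Hd w Hw1).
  pose proof (Cmod_tri3 (f w - f z) (l * (w - z))) as T.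
  rewrite Cmod_mult in T. pose proof (Cmod_ge_0 (w - z)).
  assert (Cmod (w - z) * (Cmod l + 2) < eps).
  { apply (Rmult_lt_compat_r (Cmod l + 2)) in Hw2; [|lra].
    unfold Rdiv in Hw2. rewrite Rmult_assoc, Rinv_l in Hw2; lra. }
  nra.
Qed.

Lemma cderiv_ccont f z l : cderiv_at f z l -> ccont f z.
Proof. intros H; apply (cderiv_eps_ccont f z l), cderiv_to_eps, H. Qed.

(* Quantitative continuity of the product and of the inverse, shared by
   every continuity notion below. *)
Definition mult_modulus (a b : C) (eps : R) : R := Rmin 1 (eps / (Cmod a + Cmod b + 1)).

Lemma mult_modulus_pos (a b : C) eps : 0 < eps -> 0 < mult_modulus a b eps.
Proof.
  intros. pose proof (Cmod_ge_0 a). pose proof (Cmod_ge_0 b).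
  apply Rmin_pos; [lra|]. apply Rdiv_lt_0_compat; lra.
Qed.

Lemma mult_close (a b a' b' : C) eps : 0 < eps ->
  Cmod (a' - a) < mult_modulus a b eps -> Cmod (b' - b) < mult_modulus a b eps ->
  Cmod (a' * b' - a * b) < eps.
Proof.
  unfold mult_modulus. intros He Ha Hb.
  set (d := Rmin 1 (eps / (Cmod a + Cmod b + 1))) in *.
  pose proof (Cmod_ge_0 a). pose proof (Cmod_ge_0 b).
  pose proof (Cmod_ge_0 (a' - a)). pose proof (Cmod_ge_0 (b' - b)).
  assert (d <= 1) by apply Rmin_l.
  assert (Hd : d * (Cmod a + Cmod b + 1) <= eps).
  { assert (Hd' : d <= eps / (Cmod a + Cmod b + 1)) by apply Rmin_r.
    apply (Rmult_le_compat_r (Cmod a + Cmod b + 1)) in Hd'; [|lra].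
    unfold Rdiv in Hd'. rewrite Rmult_assoc, Rinv_l in Hd'; lra. }
  replace (a' * b' - a * b)%C with ((a' - a) * (b' - b) + a * (b' - b) + (a' - a) * b)%C
    by ring.
  eapply Rle_lt_trans.
  { eapply Rle_trans; [apply Cmod_triangle|]. apply Rplus_le_compat_r, Cmod_triangle. }
  rewrite !Cmod_mult.
  assert (Cmod (a' - a) * Cmod (b' - b) <= Cmod (a' - a)) by nra.
  assert (Cmod a * Cmod (b' - b) <= Cmod a * d) by nra.
  assert (Cmod (a' - a) * Cmod b <= d * Cmod b) by nra.
  nra.
Qed.

Definition inv_modulus (a : C) (eps : R) : R :=
  Rmin (Cmod a / 2) (eps * (Cmod a * Cmod a) / 2).

Lemma inv_modulus_pos (a : C) eps : 0 < eps -> a <> 0%C -> 0 < inv_modulus a eps.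
Proof.
  intros He Ha. assert (Hm : 0 < Cmod a) by (apply (proj1 (Cmod_gt_0 _)); auto).
  apply Rmin_pos; [lra|]. apply Rdiv_lt_0_compat; [|lra]. apply Rmult_lt_0_compat; nra.
Qed.

Lemma inv_close (a a' : C) eps : 0 < eps -> a <> 0%C ->
  Cmod (a' - a) < inv_modulus a eps -> a' <> 0%C /\ Cmod (/ a' - / a) < eps.
Proof.
  unfold inv_modulus. intros He Ha0 H.
  assert (Hm : 0 < Cmod a) by (apply (proj1 (Cmod_gt_0 _)); auto).
  assert (H1 : Cmod (a' - a) < Cmod a / 2) by (eapply Rlt_le_trans; [exact H| apply Rmin_l]).
  assert (H2 : Cmod (a' - a) < eps * (Cmod a * Cmod a) / 2)
    by (eapply Rlt_le_trans; [exact H| apply Rmin_r]).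
  assert (Hwm : Cmod a / 2 < Cmod a').
  { pose proof (Cmod_tri3 a a') as T. rewrite Cmod_sym in T. lra. }
  assert (Hw0 : a' <> 0%C) by (apply (proj2 (Cmod_gt_0 _)); lra).
  split; auto.
  replace (/ a' - / a)%C with ((a - a') / (a' * a))%C by (field; split; auto).
  unfold Cdiv. rewrite Cmod_mult, Cmod_inv, Cmod_mult.
  2:{ apply (proj2 (Cmod_gt_0 _)). rewrite Cmod_mult. apply Rmult_lt_0_compat; lra. }
  rewrite Cmod_sym.
  assert (0 < Cmod a' * Cmod a) by (apply Rmult_lt_0_compat; lra).
  apply (Rmult_lt_reg_r (Cmod a' * Cmod a)); auto.
  rewrite Rmult_assoc, Rinv_l by lra. rewrite Rmult_1_r.
  assert (Cmod a / 2 * Cmod a <= Cmod a' * Cmod a) by nra.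
  nra.
Qed.

Lemma ccont_const c z : ccont (fun _ => c) z.
Proof.
  intros eps He. exists 1. split; [lra|]. intros.
  replace (c - c)%C with (RtoC 0) by ring. rewrite Cmod_0; lra.
Qed.

Lemma ccont_id z : ccont (fun w => w) z.
Proof. intros eps He. exists eps. split; auto. Qed.

Lemma ccont_plus f g z : ccont f z -> ccont g z -> ccont (fun w => f w + g w)%C z.
Proof.
  intros Hf Hg eps He.
  destruct (Hf (eps/2)) as [d1 [Hd1 H1]]; [lra|].
  destruct (Hg (eps/2)) as [d2 [Hd2 H2]]; [lra|].
  exists (Rmin d1 d2). split; [apply Rmin_pos; auto|]. intros w Hw.
  specialize (H1 w (Rlt_le_trans _ _ _ Hw (Rmin_l _ _))).
  specialize (H2 w (Rlt_le_trans _ _ _ Hw (Rmin_r _ _))).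
  replace (f w + g w - (f z + g z))%C with ((f w - f z) + (g w - g z))%C by ring.
  eapply Rle_lt_trans; [apply Cmod_triangle|]. lra.
Qed.

Lemma ccont_opp f z : ccont f z -> ccont (fun w => - f w)%C z.
Proof.
  intros Hf eps He. destruct (Hf eps He) as [d [Hd H]]. exists d. split; auto.
  intros w Hw. replace (- f w - - f z)%C with (- (f w - f z))%C by ring.
  rewrite Cmod_opp. auto.
Qed.

Lemma ccont_mult f g z : ccont f z -> ccont g z -> ccont (fun w => f w * g w)%C z.
Proof.
  intros Hf Hg eps He.
  pose proof (mult_modulus_pos (f z) (g z) eps He) as Hd.
  destruct (Hf _ Hd) as [d1 [Hd1 H1]].
  destruct (Hg _ Hd) as [d2 [Hd2 H2]].
  exists (Rmin d1 d2). split; [apply Rmin_pos; auto|]. intros w Hw.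
  apply mult_close; auto.
  - apply H1. eapply Rlt_le_trans; [exact Hw| apply Rmin_l].
  - apply H2. eapply Rlt_le_trans; [exact Hw| apply Rmin_r].
Qed.

Lemma ccont_inv f z : ccont f z -> f z <> 0%C -> ccont (fun w => / f w)%C z.
Proof.
  intros Hf Hz eps He.
  destruct (Hf _ (inv_modulus_pos (f z) eps He Hz)) as [d [Hd0 H]].
  exists d. split; auto. intros w Hw. apply inv_close; auto.
Qed.

Lemma cderiv_eq f z l l' : cderiv_at f z l -> l = l' -> cderiv_at f z l'.
Proof. intros H ->; exact H. Qed.

Lemma cderiv_const (c z : C) : cderiv_at (fun _ => c) z 0%C.
Proof. apply (@is_derive_const C_AbsRing C_NormedModule). Qed.

Lemma cderiv_id (z : C) : cderiv_at (fun w => w) z 1%C.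
Proof. apply cderiv_of_eps, abs_deriv_to_eps. exact (@is_derive_id C_AbsRing z). Qed.

Lemma cderiv_mult f g z a b : cderiv_at f z a -> cderiv_at g z b ->
  cderiv_at (fun w => f w * g w)%C z (a * g z + f z * b)%C.
Proof.
  intros Ha Hb. apply cderiv_of_eps, abs_deriv_to_eps.
  apply (@is_derive_mult C_AbsRing); try (apply abs_deriv_of_eps, cderiv_to_eps; auto).
  intros; apply Cmult_comm.
Qed.

Lemma cderiv_comp f g z a b : cderiv_at f (g z) a -> cderiv_at g z b ->
  cderiv_at (fun w => f (g w)) z (b * a)%C.
Proof.
  intros Ha Hb. apply (@is_derive_comp C_AbsRing C_NormedModule); auto.
  apply abs_deriv_of_eps, cderiv_to_eps; auto.
Qed.

Lemma cderiv_inv (z : C) : z <> 0%C -> cderiv_at Cinv z (- / (z * z))%C.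
Proof.
  intros Hz. apply cderiv_of_eps. intros eps Heps.
  assert (Hm : 0 < Cmod z) by (apply (proj1 (Cmod_gt_0 _)); auto).
  exists (Rmin (Cmod z / 2) (eps * (Cmod z * Cmod z * Cmod z) / 2)).
  split.
  { apply Rmin_pos; [lra|]. apply Rdiv_lt_0_compat; [|lra].
    apply Rmult_lt_0_compat; [lra|]. repeat apply Rmult_lt_0_compat; lra. }
  intros w Hw.
  assert (Hw1 : Cmod (w - z) < Cmod z / 2) by (eapply Rlt_le_trans; [exact Hw| apply Rmin_l]).
  assert (Hw2 : Cmod (w - z) < eps * (Cmod z * Cmod z * Cmod z) / 2)
    by (eapply Rlt_le_trans; [exact Hw| apply Rmin_r]).
  assert (Hwm : Cmod z / 2 < Cmod w).
  { pose proof (Cmod_tri3 z w) as T. rewrite Cmod_sym in T. lra. }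
  assert (Hw0 : w <> 0%C) by (apply (proj2 (Cmod_gt_0 _)); lra).
  replace (/ w - / z - - / (z * z) * (w - z))%C with ((w - z) * (w - z) / (w * z * z))%C
    by (field; repeat split; auto).
  unfold Cdiv. rewrite !Cmod_mult, Cmod_inv, !Cmod_mult.
  2:{ apply (proj2 (Cmod_gt_0 _)). rewrite !Cmod_mult. repeat apply Rmult_lt_0_compat; lra. }
  pose proof (Cmod_ge_0 (w - z)).
  set (a := Cmod (w - z)) in *. set (P := Cmod w * Cmod z * Cmod z).
  assert (0 < P) by (unfold P; repeat apply Rmult_lt_0_compat; lra).
  assert (Cmod z * Cmod z * (Cmod z / 2) <= P).
  { unfold P. assert (0 < Cmod z * Cmod z) by nra. nra. }
  assert (a * / P <= eps).
  { apply (Rmult_le_reg_r P); auto. rewrite Rmult_assoc, Rinv_l; nra. }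
  replace (a * a * / P) with (a * (a * / P)) by ring.
  rewrite (Rmult_comm eps). apply Rmult_le_compat_l; auto.
Qed.

Lemma Cmod_cpow (w : C) n : Cmod (cpow w n) = Cmod w ^ n.
Proof. induction n; simpl. apply Cmod_1. rewrite Cmod_mult, IHn. reflexivity. Qed.

Lemma cpow_nz (w : C) n : w <> 0%C -> cpow w n <> 0%C.
Proof.
  intros Hw H. apply (f_equal Cmod) in H. rewrite Cmod_cpow, Cmod_0 in H.
  apply (proj1 (Cmod_gt_0 _)) in Hw. apply (pow_lt _ n) in Hw. lra.
Qed.

Lemma cderiv_cpow (f : C -> C) (z a : C) n : cderiv_at f z a ->
  cderiv_at (fun w => cpow (f w) n) z (RtoC (INR n) * cpow (f z) (pred n) * a)%C.
Proof.
  intros Ha. induction n.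
  - eapply cderiv_eq; [apply (cderiv_const (RtoC 1))|]. simpl. ring.
  - eapply cderiv_eq; [apply (cderiv_mult _ _ _ _ _ Ha IHn)|].
    destruct n.
    + simpl. ring.
    + simpl pred. rewrite !S_INR, !RtoC_plus.
      change (cpow (f z) (S n)) with (f z * cpow (f z) n)%C. ring.
Qed.

Lemma ccont_cpow f z n : ccont f z -> ccont (fun w => cpow (f w) n) z.
Proof.
  intros Hf. induction n.
  - exact (ccont_const (RtoC 1) z).
  - apply (ccont_mult f (fun w => cpow (f w) n)); auto.
Qed.

(** * Curves in the complex plane *)

Definition cis (x : R) : C := (cos x, sin x).

Lemma Cmod_cis x : Cmod (cis x) = 1.
Proof.
  unfold Cmod, cis; simpl. pose proof (sin2_cos2 x). unfold Rsqr in H.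
  replace (cos x * (cos x * 1) + sin x * (sin x * 1)) with 1 by lra. apply sqrt_1.
Qed.

Lemma cis_add a b : cis (a + b) = (cis a * cis b)%C.
Proof.
  unfold cis. apply injective_projections; simpl; [rewrite cos_plus|rewrite sin_plus]; ring.
Qed.

Lemma cis_0 : cis 0 = RtoC 1.
Proof. unfold cis. rewrite cos_0, sin_0. reflexivity. Qed.

Lemma Cmod_circle (w : C) t th : Cmod (w + RtoC t * cis th - w)%C = Rabs t.
Proof.
  replace (w + RtoC t * cis th - w)%C with (RtoC t * cis th)%C by ring.
  rewrite Cmod_mult, Cmod_cis, Cmod_R. ring.
Qed.

Lemma Cmod_polar_point (t th : R) : 0 <= t -> Cmod (RtoC t * cis th) = t.
Proof. intros. rewrite Cmod_mult, Cmod_cis, Cmod_R, Rabs_pos_eq; lra. Qed.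

Definition curve_deriv (g : R -> C) (t : R) (v : C) : Prop :=
  is_derive (fun s => fst (g s)) t (fst v) /\ is_derive (fun s => snd (g s)) t (snd v).

Definition curve_deriv_eps (g : R -> C) (t : R) (v : C) : Prop :=
  forall eps, 0 < eps -> exists d, 0 < d /\ forall s, Rabs (s - t) < d ->
    Cmod (g s - g t - RtoC (s - t) * v) <= eps * Rabs (s - t).

Lemma curve_deriv_to_eps g t v : curve_deriv g t v -> curve_deriv_eps g t v.
Proof.
  intros [H1 H2] eps He.
  apply is_derive_Reals in H1. apply is_derive_Reals in H2.
  destruct (H1 (eps/2)) as [d1 Hd1]; [lra|].
  destruct (H2 (eps/2)) as [d2 Hd2]; [lra|].
  exists (Rmin d1 d2). split; [apply Rmin_pos; apply cond_pos|].
  intros s Hs.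
  destruct (Req_dec s t) as [->|Hne].
  { replace (g t - g t - RtoC (t - t) * v)%C with (RtoC 0)
      by (apply injective_projections; simpl; ring).
    rewrite Cmod_0, Rminus_eq_0, Rabs_R0; lra. }
  assert (Hh : s - t <> 0) by lra.
  assert (Hp : 0 < Rabs (s - t)) by (apply Rabs_pos_lt; auto).
  specialize (Hd1 (s - t) Hh (Rlt_le_trans _ _ _ Hs (Rmin_l _ _))).
  specialize (Hd2 (s - t) Hh (Rlt_le_trans _ _ _ Hs (Rmin_r _ _))).
  replace (t + (s - t)) with s in * by ring.
  assert (Hcomp : forall a b l, Rabs ((a - b) / (s - t) - l) < eps / 2 ->
            Rabs (a - b - (s - t) * l) <= eps / 2 * Rabs (s - t)).
  { intros a b l Hab.
    replace (a - b - (s - t) * l) with ((s - t) * ((a - b) / (s - t) - l)) by (field; auto).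
    rewrite Rabs_mult. nra. }
  eapply Rle_trans; [apply Cmod_le_sum|]. simpl.
  pose proof (Hcomp _ _ _ Hd1) as Hcomp1. pose proof (Hcomp _ _ _ Hd2) as Hcomp2.
  replace (fst (g s) + - fst (g t) + - ((s - t) * fst v - 0 * snd v))
    with (fst (g s) - fst (g t) - (s - t) * fst v) by ring.
  replace (snd (g s) + - snd (g t) + - ((s - t) * snd v + 0 * fst v))
    with (snd (g s) - snd (g t) - (s - t) * snd v) by ring.
  lra.
Qed.

Lemma curve_deriv_of_eps g t v : curve_deriv_eps g t v -> curve_deriv g t v.
Proof.
  intros H.
  assert (Hq : forall h a l eps, h <> 0 -> 0 < eps -> Rabs (a - h * l) <= eps / 2 * Rabs h ->
             Rabs (a / h - l) < eps).
  { intros h a l eps Hh He Ha.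
    assert (Hp : 0 < Rabs h) by (apply Rabs_pos_lt; auto).
    replace (a / h - l) with ((a - h * l) / h) by (field; auto).
    unfold Rdiv. rewrite Rabs_mult, Rabs_inv.
    apply (Rmult_lt_reg_r (Rabs h)); auto. rewrite Rmult_assoc, Rinv_l by lra. nra. }
  split; apply is_derive_Reals; intros eps He;
    destruct (H (eps/2)) as [d [Hd Hs]]; try lra;
    exists (mkposreal d Hd); intros h Hh0 Hh; simpl in Hh;
    specialize (Hs (t + h)); replace (t + h - t) with h in Hs by ring;
    specialize (Hs Hh); apply Hq; auto.
  - pose proof (re_le_Cmod (g (t + h)%R - g t - RtoC h * v)%C) as K. simpl in K.
    replace (fst (g (t + h)) - fst (g t) - h * fst v)
      with (fst (g (t + h)) + - fst (g t) + - (h * fst v - 0 * snd v)) by ring. lra.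
  - pose proof (Cmod_snd (g (t + h)%R - g t - RtoC h * v)%C) as K. simpl in K.
    replace (snd (g (t + h)) - snd (g t) - h * snd v)
      with (snd (g (t + h)) + - snd (g t) + - (h * snd v + 0 * fst v)) by ring. lra.
Qed.

Lemma curve_deriv_eps_lipschitz g t v : curve_deriv_eps g t v ->
  exists d, 0 < d /\ forall s, Rabs (s - t) < d ->
    Cmod (g s - g t) <= (Cmod v + 1) * Rabs (s - t).
Proof.
  intros H. destruct (H 1 Rlt_0_1) as [d [Hd Hs]]. exists d; split; auto.
  intros s Hst. specialize (Hs s Hst).
  pose proof (Cmod_tri3 (g s - g t) (RtoC (s - t) * v)) as T.
  rewrite Cmod_mult, Cmod_R in T. lra.
Qed.

Lemma chain_curve_eps (H : C -> C) (g : R -> C) t L v :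
  cderiv_at H (g t) L -> curve_deriv_eps g t v ->
  curve_deriv_eps (fun s => H (g s)) t (L * v)%C.
Proof.
  intros HH Hg eps He. apply cderiv_to_eps in HH.
  pose proof (Cmod_ge_0 v) as Pv. pose proof (Cmod_ge_0 L) as PL.
  destruct (curve_deriv_eps_lipschitz g t v Hg) as [d0 [Hd0 Hb]].
  destruct (HH (eps / (2 * (Cmod v + 1)))) as [d1 [Hd1 H1]].
  { apply Rdiv_lt_0_compat; lra. }
  destruct (Hg (eps / (2 * (Cmod L + 1)))) as [d2 [Hd2 H2]].
  { apply Rdiv_lt_0_compat; lra. }
  exists (Rmin d0 (Rmin d2 (d1 / (Cmod v + 1)))). split.
  { apply Rmin_pos; auto. apply Rmin_pos; auto. apply Rdiv_lt_0_compat; lra. }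
  intros s Hs.
  assert (Hs0 : Rabs (s - t) < d0) by (eapply Rlt_le_trans; [exact Hs|apply Rmin_l]).
  assert (Hs2 : Rabs (s - t) < d2)
    by (eapply Rlt_le_trans; [exact Hs|eapply Rle_trans; [apply Rmin_r|apply Rmin_l]]).
  assert (Hs1 : Rabs (s - t) < d1 / (Cmod v + 1))
    by (eapply Rlt_le_trans; [exact Hs|eapply Rle_trans; [apply Rmin_r|apply Rmin_r]]).
  specialize (Hb s Hs0). specialize (H2 s Hs2).
  pose proof (Rabs_pos (s - t)) as Pst.
  assert (Hgs : Cmod (g s - g t) < d1).
  { apply (Rmult_lt_compat_l (Cmod v + 1)) in Hs1; [|lra].
    unfold Rdiv in Hs1.
    rewrite (Rmult_comm d1), <- Rmult_assoc, Rinv_r, Rmult_1_l in Hs1 by lra. lra. }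
  specialize (H1 (g s) Hgs).
  replace (H (g s) - H (g t) - RtoC (s - t) * (L * v))%C with
    ((H (g s) - H (g t) - L * (g s - g t)) + L * (g s - g t - RtoC (s - t) * v))%C by ring.
  eapply Rle_trans; [apply Cmod_triangle|]. rewrite Cmod_mult.
  assert (A1 : eps / (2 * (Cmod v + 1)) * Cmod (g s - g t) <= eps / 2 * Rabs (s - t)).
  { apply Rle_trans with (eps / (2 * (Cmod v + 1)) * ((Cmod v + 1) * Rabs (s - t))).
    - apply Rmult_le_compat_l; auto. apply Rlt_le, Rdiv_lt_0_compat; lra.
    - right. field. lra. }
  assert (A2 : Cmod L * (eps / (2 * (Cmod L + 1)) * Rabs (s - t)) <= eps / 2 * Rabs (s - t)).
  { rewrite <- Rmult_assoc. apply Rmult_le_compat_r; auto.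
    apply Rle_trans with ((Cmod L + 1) * (eps / (2 * (Cmod L + 1)))).
    - apply Rmult_le_compat_r; [apply Rlt_le, Rdiv_lt_0_compat|]; lra.
    - right. field. lra. }
  assert (Cmod L * Cmod (g s - g t - RtoC (s - t) * v)
          <= Cmod L * (eps / (2 * (Cmod L + 1)) * Rabs (s - t)))
    by (apply Rmult_le_compat_l; auto).
  lra.
Qed.

Lemma chain_curve (H : C -> C) (g : R -> C) t L v :
  cderiv_at H (g t) L -> curve_deriv g t v -> curve_deriv (fun s => H (g s)) t (L * v)%C.
Proof. intros. apply curve_deriv_of_eps, chain_curve_eps; auto. apply curve_deriv_to_eps; auto. Qed.

Lemma curve_deriv_eq g t v v' : curve_deriv g t v -> v = v' -> curve_deriv g t v'.
Proof. intros H ->; auto. Qed.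

Lemma curve_deriv_ext_loc f h t v d : 0 < d -> (forall s, Rabs (s - t) < d -> f s = h s) ->
  curve_deriv f t v -> curve_deriv h t v.
Proof.
  intros Hd He [H1 H2]. split.
  - apply (is_derive_ext_loc (fun s => fst (f s))); auto.
    exists (mkposreal d Hd). intros y Hy. rewrite He; auto.
  - apply (is_derive_ext_loc (fun s => snd (f s))); auto.
    exists (mkposreal d Hd). intros y Hy. rewrite He; auto.
Qed.

Lemma curve_deriv_ext g h t v : (forall s, g s = h s) -> curve_deriv g t v -> curve_deriv h t v.
Proof. intros E0. apply (curve_deriv_ext_loc g h t v 1 Rlt_0_1). intros; apply E0. Qed.

Lemma curve_deriv_unique f t a b : curve_deriv f t a -> curve_deriv f t b -> a = b.
Proof.
  intros [A1 A2] [B1 B2]. apply injective_projections.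
  - apply is_derive_unique in A1. apply is_derive_unique in B1. congruence.
  - apply is_derive_unique in A2. apply is_derive_unique in B2. congruence.
Qed.

Lemma is_derive_eqv (f : R -> R) x l l' : is_derive f x l -> l = l' -> is_derive f x l'.
Proof. intros H ->; auto. Qed.

Lemma curve_deriv_mult g h t a b : curve_deriv g t a -> curve_deriv h t b ->
  curve_deriv (fun s => g s * h s)%C t (a * h t + g t * b)%C.
Proof.
  intros [G1 G2] [H1 H2]. split; simpl.
  - pose proof (is_derive_minus _ _ t _ _ (Derive.is_derive_mult _ _ t _ _ G1 H1)
        (Derive.is_derive_mult _ _ t _ _ G2 H2)) as K.
    eapply is_derive_eqv; [eapply is_derive_ext; [|exact K]; intros; reflexivity|].
    unfold minus, plus, opp; simpl. ring.
  - pose proof (is_derive_plus _ _ t _ _ (Derive.is_derive_mult _ _ t _ _ G1 H2)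
        (Derive.is_derive_mult _ _ t _ _ G2 H1)) as K.
    eapply is_derive_eqv; [eapply is_derive_ext; [|exact K]; intros; reflexivity|].
    unfold minus, plus, opp; simpl. ring.
Qed.

Lemma curve_deriv_plus g h t a b : curve_deriv g t a -> curve_deriv h t b ->
  curve_deriv (fun s => g s + h s)%C t (a + b)%C.
Proof.
  intros [G1 G2] [H1 H2]. split; simpl.
  - apply (is_derive_plus (fun s => fst (g s)) (fun s => fst (h s))); auto.
  - apply (is_derive_plus (fun s => snd (g s)) (fun s => snd (h s))); auto.
Qed.

Lemma curve_deriv_const (c : C) t : curve_deriv (fun _ => c) t (RtoC 0).
Proof.
  split; simpl; [exact (is_derive_const (fst c) t)|exact (is_derive_const (snd c) t)].
Qed.

Lemma curve_deriv_cis k x : curve_deriv (fun s => cis (k * s)) x (RtoC k * Ci * cis (k * x))%C.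
Proof. split; unfold cis; simpl; auto_derive; auto; ring. Qed.

Lemma curve_deriv_line (w e : C) u : curve_deriv (fun s => w + RtoC s * e)%C u e.
Proof. split; simpl; auto_derive; auto; ring. Qed.

Lemma curve_deriv_circle (w : C) t th :
  curve_deriv (fun s => w + RtoC t * cis s)%C th (RtoC t * (Ci * cis th))%C.
Proof.
  eapply curve_deriv_eq.
  - apply curve_deriv_plus; [apply curve_deriv_const|].
    apply curve_deriv_mult; [apply curve_deriv_const|].
    apply (curve_deriv_ext (fun s => cis (1 * s))); [intros; rewrite Rmult_1_l; auto|].
    apply curve_deriv_cis.
  - rewrite Rmult_1_l. ring.
Qed.

Lemma curve_deriv_integrand (H H' : C -> C) (w : C) k th u :
  cderiv_at H (w + RtoC u * cis th)%C (H' (w + RtoC u * cis th)%C) ->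
  curve_deriv (fun u => cis (k * th) * H (w + RtoC u * cis th))%C u
              (cis (k * th) * cis th * H' (w + RtoC u * cis th))%C.
Proof.
  intros Hd. eapply curve_deriv_eq.
  - apply curve_deriv_mult; [apply curve_deriv_const|].
    apply (chain_curve H (fun u => w + RtoC u * cis th)%C); [exact Hd|apply curve_deriv_line].
  - cbv beta. ring.
Qed.

Lemma continuity_pt_of_eps (f : R -> R) x :
  (forall eps, 0 < eps -> exists d, 0 < d /\
     forall y, Rabs (y - x) < d -> Rabs (f y - f x) < eps) ->
  continuity_pt f x.
Proof.
  intros H eps He. destruct (H eps He) as [d [Hd Hy]]. exists d; split; auto.
  intros y [_ Hy2]. apply Hy. exact Hy2.
Qed.

Lemma continuity_pt_to_eps (f : R -> R) x : continuity_pt f x ->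
  forall eps, 0 < eps -> exists d, 0 < d /\
    forall y, Rabs (y - x) < d -> Rabs (f y - f x) < eps.
Proof.
  intros H eps He. destruct (H eps He) as [d [Hd Hy]]. exists d; split; auto.
  intros y Hyx. destruct (Req_dec y x) as [->|Hne].
  - rewrite Rminus_eq_0, Rabs_R0; auto.
  - apply (Hy y). split; [split; [exact I| auto]|exact Hyx].
Qed.

Definition curve_cont (g : R -> C) (t : R) : Prop :=
  forall eps, 0 < eps -> exists d, 0 < d /\
    forall s, Rabs (s - t) < d -> Cmod (g s - g t) < eps.

Lemma curve_cont_component (p : C -> R) g t :
  (forall z, Rabs (p z) <= Cmod z) -> (forall a b, p (a - b)%C = p a - p b) ->
  curve_cont g t -> continuous (fun s => p (g s)) t.
Proof.
  intros Hp Hlin H. apply continuity_pt_filterlim, continuity_pt_of_eps.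
  intros eps He. destruct (H eps He) as [d [Hd Hs]]. exists d; split; auto.
  intros y Hy. rewrite <- Hlin. eapply Rle_lt_trans; [apply Hp|apply Hs, Hy].
Qed.

Lemma curve_cont_fst g t : curve_cont g t -> continuous (fun s => fst (g s)) t.
Proof. apply curve_cont_component; [apply re_le_Cmod|reflexivity]. Qed.

Lemma curve_cont_snd g t : curve_cont g t -> continuous (fun s => snd (g s)) t.
Proof. apply curve_cont_component; [apply Cmod_snd|reflexivity]. Qed.

Lemma curve_cont_Cmod g t : curve_cont g t -> continuity_pt (fun s => Cmod (g s)) t.
Proof.
  intros H. apply continuity_pt_of_eps.
  intros eps He. destruct (H eps He) as [d [Hd Hs]]. exists d; split; auto.
  intros y Hy. specialize (Hs y Hy).
  pose proof (Cmod_tri3 (g y) (g t)). pose proof (Cmod_tri3 (g t) (g y)) as T.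
  rewrite Cmod_sym in T. apply Rabs_def1; lra.
Qed.

Lemma curve_deriv_cont g t v : curve_deriv g t v -> curve_cont g t.
Proof.
  intros H0 eps He.
  destruct (curve_deriv_eps_lipschitz g t v (curve_deriv_to_eps g t v H0)) as [d [Hd Hb]].
  pose proof (Cmod_ge_0 v).
  exists (Rmin d (eps / (Cmod v + 1))). split.
  { apply Rmin_pos; auto. apply Rdiv_lt_0_compat; lra. }
  intros s Hs. eapply Rle_lt_trans; [apply Hb; eapply Rlt_le_trans; [exact Hs|apply Rmin_l]|].
  assert (Hs' : Rabs (s - t) < eps / (Cmod v + 1))
    by (eapply Rlt_le_trans; [exact Hs|apply Rmin_r]).
  apply (Rmult_lt_compat_l (Cmod v + 1)) in Hs'; [|lra].
  unfold Rdiv in Hs'. rewrite (Rmult_comm eps), <- Rmult_assoc, Rinv_r, Rmult_1_l in Hs' by lra.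
  lra.
Qed.

Lemma curve_cont_comp (H : C -> C) (g : R -> C) t :
  ccont H (g t) -> curve_cont g t -> curve_cont (fun s => H (g s)) t.
Proof.
  intros HH Hg eps He. destruct (HH eps He) as [d1 [Hd1 H1]].
  destruct (Hg d1 Hd1) as [d2 [Hd2 H2]]. exists d2. split; auto.
Qed.

Lemma curve_cont_mult g h t : curve_cont g t -> curve_cont h t -> curve_cont (fun s => g s * h s)%C t.
Proof.
  intros Hf Hg eps He.
  pose proof (mult_modulus_pos (g t) (h t) eps He) as Hd.
  destruct (Hf _ Hd) as [d1 [Hd1 H1]].
  destruct (Hg _ Hd) as [d2 [Hd2 H2]].
  exists (Rmin d1 d2). split; [apply Rmin_pos; auto|]. intros w Hw.
  apply mult_close; auto.
  - apply H1. eapply Rlt_le_trans; [exact Hw| apply Rmin_l].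
  - apply H2. eapply Rlt_le_trans; [exact Hw| apply Rmin_r].
Qed.

Lemma curve_cont_plus g h t : curve_cont g t -> curve_cont h t -> curve_cont (fun s => g s + h s)%C t.
Proof.
  intros Hf Hg eps He.
  destruct (Hf (eps/2)) as [d1 [Hd1 H1]]; [lra|].
  destruct (Hg (eps/2)) as [d2 [Hd2 H2]]; [lra|].
  exists (Rmin d1 d2). split; [apply Rmin_pos; auto|]. intros w Hw.
  specialize (H1 w (Rlt_le_trans _ _ _ Hw (Rmin_l _ _))).
  specialize (H2 w (Rlt_le_trans _ _ _ Hw (Rmin_r _ _))).
  replace (g w + h w - (g t + h t))%C with ((g w - g t) + (h w - h t))%C by ring.
  eapply Rle_lt_trans; [apply Cmod_triangle|]. lra.
Qed.

Lemma curve_cont_const (c : C) t : curve_cont (fun _ => c) t.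
Proof. eapply curve_deriv_cont, curve_deriv_const. Qed.

Lemma curve_cont_cis k x : curve_cont (fun s => cis (k * s)) x.
Proof. eapply curve_deriv_cont, curve_deriv_cis. Qed.

Lemma curve_cont_cis1 x : curve_cont cis x.
Proof.
  apply (curve_deriv_cont _ _ _
           (curve_deriv_ext _ _ _ _ (fun s => f_equal cis (Rmult_1_l s)) (curve_deriv_cis 1 x))).
Qed.

Lemma curve_cont_circle (w : C) t x : curve_cont (fun b => w + RtoC t * cis b)%C x.
Proof. eapply curve_deriv_cont, curve_deriv_circle. Qed.

Definition cont2C (h : R -> R -> C) (u v : R) : Prop :=
  forall eps, 0 < eps -> exists d, 0 < d /\
    forall u' v', Rabs (u' - u) < d -> Rabs (v' - v) < d -> Cmod (h u' v' - h u v) < eps.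

Lemma cont2C_component (p : C -> R) h u v :
  (forall z, Rabs (p z) <= Cmod z) -> (forall a b, p (a - b)%C = p a - p b) ->
  cont2C h u v -> continuity_2d_pt (fun a b => p (h a b)) u v.
Proof.
  intros Hp Hlin H [eps He]. destruct (H eps He) as [d [Hd Hs]]. exists (mkposreal d Hd).
  intros a b Ha Hb. simpl in *. rewrite <- Hlin.
  eapply Rle_lt_trans; [apply Hp|apply (Hs a b Ha Hb)].
Qed.

Lemma cont2C_comp (H : C -> C) h u v :
  ccont H (h u v) -> cont2C h u v -> cont2C (fun a b => H (h a b)) u v.
Proof.
  intros HH Hg eps He. destruct (HH eps He) as [d1 [Hd1 H1]].
  destruct (Hg d1 Hd1) as [d2 [Hd2 H2]]. exists d2. split; auto.
Qed.

Lemma cont2C_mult g h u v : cont2C g u v -> cont2C h u v ->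
  cont2C (fun a b => g a b * h a b)%C u v.
Proof.
  intros Hf Hg eps He.
  pose proof (mult_modulus_pos (g u v) (h u v) eps He) as Hd.
  destruct (Hf _ Hd) as [d1 [Hd1 H1]].
  destruct (Hg _ Hd) as [d2 [Hd2 H2]].
  exists (Rmin d1 d2). split; [apply Rmin_pos; auto|]. intros a b Ha Hb.
  apply mult_close; auto.
  - apply H1; eapply Rlt_le_trans; eauto; apply Rmin_l.
  - apply H2; eapply Rlt_le_trans; eauto; apply Rmin_r.
Qed.

Lemma cont2C_plus g h u v : cont2C g u v -> cont2C h u v ->
  cont2C (fun a b => g a b + h a b)%C u v.
Proof.
  intros Hf Hg eps He.
  destruct (Hf (eps/2)) as [d1 [Hd1 H1]]; [lra|].
  destruct (Hg (eps/2)) as [d2 [Hd2 H2]]; [lra|].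
  exists (Rmin d1 d2). split; [apply Rmin_pos; auto|]. intros a b Ha Hb.
  specialize (H1 a b (Rlt_le_trans _ _ _ Ha (Rmin_l _ _)) (Rlt_le_trans _ _ _ Hb (Rmin_l _ _))).
  specialize (H2 a b (Rlt_le_trans _ _ _ Ha (Rmin_r _ _)) (Rlt_le_trans _ _ _ Hb (Rmin_r _ _))).
  replace (g a b + h a b - (g u v + h u v))%C with ((g a b - g u v) + (h a b - h u v))%C by ring.
  eapply Rle_lt_trans; [apply Cmod_triangle|]. lra.
Qed.

Lemma cont2C_const (c : C) u v : cont2C (fun _ _ => c) u v.
Proof.
  intros eps He. exists 1. split; [lra|]. intros.
  replace (c - c)%C with (RtoC 0) by ring. rewrite Cmod_0; lra.
Qed.

Lemma cont2C_radius u v : cont2C (fun a _ => RtoC a) u v.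
Proof.
  intros eps He. exists eps. split; auto. intros a b Ha _.
  replace (RtoC a - RtoC u)%C with (RtoC (a - u)) by (apply injective_projections; simpl; ring).
  rewrite Cmod_R. auto.
Qed.

Lemma cont2C_cis k u v : cont2C (fun _ b => cis (k * b)) u v.
Proof.
  intros eps He.
  destruct (continuity_pt_to_eps cos (k * v) (continuity_cos _) (eps / 2)) as [d1 [Hd1 H1]]; [lra|].
  destruct (continuity_pt_to_eps sin (k * v) (continuity_sin _) (eps / 2)) as [d2 [Hd2 H2]]; [lra|].
  exists (Rmin d1 d2 / (Rabs k + 1)). split.
  { apply Rdiv_lt_0_compat. apply Rmin_pos; auto. pose proof (Rabs_pos k); lra. }
  intros a b _ Hb.
  assert (Hk : Rabs (k * b - k * v) < Rmin d1 d2).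
  { replace (k * b - k * v) with (k * (b - v)) by ring. rewrite Rabs_mult.
    pose proof (Rabs_pos k). pose proof (Rabs_pos (b - v)).
    apply (Rmult_lt_compat_l (Rabs k + 1)) in Hb; [|lra].
    unfold Rdiv in Hb.
    rewrite (Rmult_comm (Rmin d1 d2)), <- Rmult_assoc, Rinv_r, Rmult_1_l in Hb by lra. nra. }
  specialize (H1 (k * b) (Rlt_le_trans _ _ _ Hk (Rmin_l _ _))).
  specialize (H2 (k * b) (Rlt_le_trans _ _ _ Hk (Rmin_r _ _))).
  eapply Rle_lt_trans; [apply Cmod_le_sum|]. unfold cis; simpl. unfold Rminus in *. lra.
Qed.

Lemma cont2C_circle (w : C) u v : cont2C (fun a b => w + RtoC a * cis b)%C u v.
Proof.
  apply cont2C_plus; [apply cont2C_const|]. apply cont2C_mult; [apply cont2C_radius|].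
  pose proof (cont2C_cis 1 u v) as H. intros eps He. destruct (H eps He) as [d [Hd Hs]].
  exists d. split; auto. intros a b Ha Hb. specialize (Hs a b Ha Hb). rewrite !Rmult_1_l in Hs.
  exact Hs.
Qed.

(** * Integrals of complex-valued functions *)

Definition CInt (f : R -> C) (a b : R) : C :=
  (RInt (fun x => fst (f x)) a b, RInt (fun x => snd (f x)) a b).

Definition curve_cont_on (f : R -> C) a b := forall x, Rmin a b <= x <= Rmax a b -> curve_cont f x.

Lemma CInt_ext f g a b :
  (forall x, Rmin a b < x < Rmax a b -> f x = g x) -> CInt f a b = CInt g a b.
Proof. intros H. unfold CInt. f_equal; apply RInt_ext; intros; rewrite H; auto. Qed.

Lemma ex_RInt_fst f a b : curve_cont_on f a b -> ex_RInt (fun x => fst (f x)) a b.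
Proof.
  intros H. apply (@ex_RInt_continuous R_CompleteNormedModule).
  intros; apply curve_cont_fst, H; auto.
Qed.

Lemma ex_RInt_snd f a b : curve_cont_on f a b -> ex_RInt (fun x => snd (f x)) a b.
Proof.
  intros H. apply (@ex_RInt_continuous R_CompleteNormedModule).
  intros; apply curve_cont_snd, H; auto.
Qed.

Lemma CInt_FTC (f f' : R -> C) a b :
  (forall x, Rmin a b <= x <= Rmax a b -> curve_deriv f x (f' x)) ->
  curve_cont_on f' a b -> CInt f' a b = (f b - f a)%C.
Proof.
  intros Hd Hc. unfold CInt. apply injective_projections; simpl;
    apply (@is_RInt_unique R_CompleteNormedModule).
  - apply (@is_RInt_derive R_CompleteNormedModule (fun x => fst (f x))).
    + intros; apply Hd; auto.
    + intros; apply curve_cont_fst, Hc; auto.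
  - apply (@is_RInt_derive R_CompleteNormedModule (fun x => snd (f x))).
    + intros; apply Hd; auto.
    + intros; apply curve_cont_snd, Hc; auto.
Qed.

Lemma CInt_plus f g a b : curve_cont_on f a b -> curve_cont_on g a b ->
  CInt (fun x => f x + g x)%C a b = (CInt f a b + CInt g a b)%C.
Proof.
  intros Hf Hg. unfold CInt. apply injective_projections; simpl;
    rewrite <- (@RInt_plus R_CompleteNormedModule); try reflexivity;
    auto using ex_RInt_fst, ex_RInt_snd.
Qed.

Lemma CInt_scal (c : C) f a b : curve_cont_on f a b ->
  CInt (fun x => c * f x)%C a b = (c * CInt f a b)%C.
Proof.
  intros Hf. unfold CInt.
  pose proof (ex_RInt_fst f a b Hf). pose proof (ex_RInt_snd f a b Hf).
  apply injective_projections; simpl;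
    rewrite <- (@RInt_scal R_CompleteNormedModule _ _ _ (fst c)) by auto;
    rewrite <- (@RInt_scal R_CompleteNormedModule _ _ _ (snd c)) by auto.
  - rewrite <- (@RInt_minus R_CompleteNormedModule);
      [apply RInt_ext; intros; reflexivity|apply (@ex_RInt_scal R_CompleteNormedModule); auto..].
  - rewrite <- (@RInt_plus R_CompleteNormedModule);
      [apply RInt_ext; intros; reflexivity|apply (@ex_RInt_scal R_CompleteNormedModule); auto..].
Qed.

Lemma CInt_const (c : C) a b : CInt (fun _ => c) a b = (RtoC (b - a) * c)%C.
Proof.
  unfold CInt. rewrite !(@RInt_const R_CompleteNormedModule).
  apply injective_projections; simpl; unfold scal; simpl; unfold mult; simpl; ring.
Qed.

Lemma RInt_Cdot (v : C) f a b : curve_cont_on f a b ->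
  RInt (fun x => fst v * fst (f x) + snd v * snd (f x)) a b
  = fst v * fst (CInt f a b) + snd v * snd (CInt f a b).
Proof.
  intros Hf. pose proof (ex_RInt_fst f a b Hf) as E1. pose proof (ex_RInt_snd f a b Hf) as E2.
  assert (S1 : RInt (fun x => fst v * fst (f x)) a b = fst v * RInt (fun x => fst (f x)) a b)
    by exact (@RInt_scal R_CompleteNormedModule (fun x => fst (f x)) a b (fst v) E1).
  assert (S2 : RInt (fun x => snd v * snd (f x)) a b = snd v * RInt (fun x => snd (f x)) a b)
    by exact (@RInt_scal R_CompleteNormedModule (fun x => snd (f x)) a b (snd v) E2).
  rewrite (@RInt_plus R_CompleteNormedModule (fun x => fst v * fst (f x))
             (fun x => snd v * snd (f x)));
    try (apply (@ex_RInt_scal R_CompleteNormedModule); auto).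
  change (RInt (fun x => fst v * fst (f x)) a b + RInt (fun x => snd v * snd (f x)) a b
          = fst v * fst (CInt f a b) + snd v * snd (CInt f a b)).
  rewrite S1, S2. reflexivity.
Qed.

Lemma CInt_bound (f : R -> C) a b B : a <= b -> curve_cont_on f a b ->
  (forall x, a <= x <= b -> Cmod (f x) <= B) -> Cmod (CInt f a b) <= (b - a) * B.
Proof.
  intros Hab Hf HB.
  set (v := CInt f a b).
  pose proof (ex_RInt_fst f a b Hf). pose proof (ex_RInt_snd f a b Hf).
  assert (Hv : Cmod v * Cmod v = RInt (fun x => fst v * fst (f x) + snd v * snd (f x)) a b)
    by (rewrite RInt_Cdot by auto; apply Cmod_sqr).
  assert (Hle : RInt (fun x => fst v * fst (f x) + snd v * snd (f x)) a b
                <= RInt (fun _ => Cmod v * B) a b).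
  { apply RInt_le; auto.
    - apply (@ex_RInt_plus R_CompleteNormedModule);
        apply (@ex_RInt_scal R_CompleteNormedModule); auto.
    - apply (@ex_RInt_const R_CompleteNormedModule).
    - intros x Hx. eapply Rle_trans; [apply Cdot_le|].
      apply Rmult_le_compat_l; [apply Cmod_ge_0|]. apply HB; lra. }
  rewrite (@RInt_const R_CompleteNormedModule), <- Hv in Hle.
  change (Cmod v * Cmod v <= (b - a) * (Cmod v * B)) in Hle.
  pose proof (Cmod_ge_0 v).
  destruct (Req_dec (Cmod v) 0) as [Hv0|Hv0].
  - rewrite Hv0. assert (0 <= B) by (eapply Rle_trans; [apply Cmod_ge_0|apply (HB a)]; lra).
    nra.
  - apply (Rmult_le_reg_l (Cmod v)); nra.
Qed.

Lemma RInt_nonneg_zero (h : R -> R) a b : a < b ->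
  (forall x, a <= x <= b -> continuous h x) ->
  (forall x, a <= x <= b -> 0 <= h x) ->
  RInt h a b = 0 -> forall x, a <= x <= b -> h x = 0.
Proof.
  intros Hab Hc Hp Hi x0 Hx0.
  destruct (Req_dec (h x0) 0) as [|Hne]; auto. exfalso.
  assert (Hpos : 0 < h x0) by (specialize (Hp x0 Hx0); lra).
  pose proof (Hc x0 Hx0) as Hcx. apply continuity_pt_filterlim in Hcx.
  destruct (continuity_pt_to_eps h x0 Hcx (h x0 / 2)) as [eta [Heta Hy]]; [lra|].
  (* h > h x0 / 2 on [c, d], a neighbourhood of x0 inside [a, b] *)
  set (c := Rmax a (x0 - eta / 2)). set (d := Rmin b (x0 + eta / 2)).
  assert (Hac : a <= c) by apply Rmax_l.
  assert (Hdb : d <= b) by apply Rmin_l.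
  assert (Hcd : c < d) by (unfold c, d; apply Rmax_case_strong; apply Rmin_case_strong; intros; lra).
  assert (Hcx0 : x0 - eta / 2 <= c <= x0) by (unfold c; apply Rmax_case_strong; intros; lra).
  assert (Hdx0 : x0 <= d <= x0 + eta / 2) by (unfold d; apply Rmin_case_strong; intros; lra).
  assert (Ex : forall u v, a <= u -> u <= v -> v <= b -> ex_RInt h u v).
  { intros u v H1 H2 H3. apply (@ex_RInt_continuous R_CompleteNormedModule).
    intros z Hz. rewrite Rmin_left in Hz by lra. rewrite Rmax_right in Hz by lra. apply Hc. lra. }
  assert (I1 : 0 <= RInt h a c) by (apply RInt_ge_0; auto; [apply Ex; lra|intros; apply Hp; lra]).
  assert (I3 : 0 <= RInt h d b) by (apply RInt_ge_0; auto; [apply Ex; lra|intros; apply Hp; lra]).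
  assert (I2 : 0 < RInt h c d).
  { apply RInt_gt_0; auto.
    - intros y Hy'. assert (Hyx : Rabs (y - x0) < eta) by (apply Rabs_def1; lra).
      specialize (Hy y Hyx). apply Rabs_def2 in Hy. lra.
    - intros y Hy'. apply Hc. lra. }
  assert (Ch1 : plus (RInt h a c) (RInt h c b) = RInt h a b)
    by (apply (@RInt_Chasles R_CompleteNormedModule); apply Ex; lra).
  assert (Ch2 : plus (RInt h c d) (RInt h d b) = RInt h c b)
    by (apply (@RInt_Chasles R_CompleteNormedModule); apply Ex; lra).
  unfold plus in Ch1, Ch2; simpl in Ch1, Ch2. lra.
Qed.

Lemma CInt_bound_equality (f : R -> C) a b M : a < b -> curve_cont_on f a b ->
  (forall x, a <= x <= b -> Cmod (f x) <= M) ->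
  Cmod (CInt f a b) = (b - a) * M -> forall x, a <= x <= b -> Cmod (f x) = M.
Proof.
  intros Hab Hf Hle Hv x Hx.
  set (v := CInt f a b) in *.
  destruct (Req_dec M 0) as [HM0|HM0].
  { apply Rle_antisym; [apply Hle; auto|rewrite HM0; apply Cmod_ge_0]. }
  assert (HMp : 0 < M) by (pose proof (Hle a ltac:(lra)); pose proof (Cmod_ge_0 (f a)); lra).
  assert (Hvp : 0 < Cmod v) by (rewrite Hv; nra).
  (* k s = |v| M - <v, f s> = Re (|v| M - conj v * f s) is nonnegative,
     continuous and has zero integral *)
  set (k := fun s => fst (RtoC (Cmod v * M) + RtoC (-1) * (Cconj v * f s))%C).
  assert (Hkf : forall s, k s = Cmod v * M - (fst v * fst (f s) + snd v * snd (f s)))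
    by (intros s; unfold k; simpl; ring).
  assert (Hkp : forall s, a <= s <= b -> 0 <= k s).
  { intros s Hs. rewrite Hkf. pose proof (Cdot_le v (f s)).
    assert (Cmod v * Cmod (f s) <= Cmod v * M) by (apply Rmult_le_compat_l; auto; lra).
    lra. }
  assert (Hkc : forall s, a <= s <= b -> continuous k s).
  { intros s Hs. apply curve_cont_fst.
    assert (Hfs : curve_cont f s) by (apply Hf; rewrite Rmin_left, Rmax_right; lra).
    apply curve_cont_plus; [apply curve_cont_const|].
    apply curve_cont_mult; [apply curve_cont_const|].
    apply curve_cont_mult; [apply curve_cont_const|auto]. }
  assert (Hint : RInt k a b = 0).
  { pose proof (ex_RInt_fst f a b Hf). pose proof (ex_RInt_snd f a b Hf).
    rewrite (RInt_ext _ _ _ _ (fun s _ => Hkf s)).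
    rewrite (@RInt_minus R_CompleteNormedModule).
    - change (RInt (fun _ => Cmod v * M) a b
              - RInt (fun x => fst v * fst (f x) + snd v * snd (f x)) a b = 0).
      rewrite RInt_Cdot by auto. fold v. rewrite <- Cmod_sqr.
      rewrite (@RInt_const R_CompleteNormedModule).
      change ((b - a) * (Cmod v * M) - Cmod v * Cmod v = 0). rewrite Hv at 2. ring.
    - apply (@ex_RInt_const R_CompleteNormedModule).
    - apply (@ex_RInt_plus R_CompleteNormedModule);
        apply (@ex_RInt_scal R_CompleteNormedModule); auto. }
  pose proof (RInt_nonneg_zero k a b Hab Hkc Hkp Hint x Hx) as Hk0. rewrite Hkf in Hk0.
  pose proof (Cdot_le v (f x)).
  apply Rle_antisym; [apply Hle; auto|].
  apply (Rmult_le_reg_l (Cmod v)); auto. lra.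
Qed.

Lemma curve_deriv_param_integral (F F' : R -> R -> C) a b t0 eta :
  0 < eta ->
  (forall t th, Rabs (t - t0) < eta -> curve_deriv (fun u => F u th) t (F' t th)) ->
  (forall th, cont2C F' t0 th) ->
  (forall t th, Rabs (t - t0) < eta -> curve_cont (F t) th) ->
  curve_deriv (fun t => CInt (F t) a b) t0 (CInt (F' t0) a b).
Proof.
  intros Heta Hd Hc Hr.
  assert (Hloc : forall P : R -> Prop, (forall y, Rabs (y - t0) < eta -> P y) -> locally t0 P).
  { intros P HP. exists (mkposreal eta Heta). intros y Hy. apply HP. exact Hy. }
  assert (Hcomp : forall p : C -> R,
    (forall z, Rabs (p z) <= Cmod z) -> (forall u w, p (u - w)%C = p u - p w) ->
    (forall t th, Rabs (t - t0) < eta -> is_derive (fun u => p (F u th)) t (p (F' t th))) ->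
    (forall t, Rabs (t - t0) < eta -> ex_RInt (fun th => p (F t th)) a b) ->
    is_derive (fun t => RInt (fun th => p (F t th)) a b) t0 (RInt (fun th => p (F' t0 th)) a b)).
  { intros p Hp Hlin Hdp Hex. eapply is_derive_eqv.
    - apply (is_derive_RInt_param (fun u th => p (F u th))).
      + apply Hloc. intros y Hy th _. exists (p (F' y th)). apply (Hdp y th Hy).
      + intros th _. apply continuity_2d_pt_ext_loc with (fun u v => p (F' u v)).
        * exists (mkposreal eta Heta). intros u v Hu _. simpl in Hu.
          symmetry. apply is_derive_unique. apply (Hdp u v Hu).
        * apply cont2C_component; auto.
      + apply Hloc. exact Hex.
    - apply RInt_ext. intros x _. apply is_derive_unique. apply Hdp.
      rewrite Rminus_eq_0, Rabs_R0; auto. }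
  split; simpl.
  - apply Hcomp; [apply re_le_Cmod|reflexivity|apply Hd|].
    intros t Ht. apply (@ex_RInt_continuous R_CompleteNormedModule).
    intros z _. apply curve_cont_fst, Hr; auto.
  - apply Hcomp; [apply Cmod_snd|reflexivity|apply Hd|].
    intros t Ht. apply (@ex_RInt_continuous R_CompleteNormedModule).
    intros z _. apply curve_cont_snd, Hr; auto.
Qed.

(** * Circle integrals and Cauchy's estimate *)

Lemma circle_integral_deriv_radius (H H' : C -> C) (w : C) k a b t0 eta :
  0 < eta ->
  (forall t th, Rabs (t - t0) < eta ->
     cderiv_at H (w + RtoC t * cis th)%C (H' (w + RtoC t * cis th)%C) /\
     ccont H' (w + RtoC t * cis th)%C) ->
  curve_deriv (fun t => CInt (fun th => cis (k * th) * H (w + RtoC t * cis th))%C a b) t0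
              (CInt (fun th => cis (k * th) * cis th * H' (w + RtoC t0 * cis th))%C a b).
Proof.
  intros Heta Hyp.
  apply (curve_deriv_param_integral (fun t th => cis (k * th) * H (w + RtoC t * cis th))%C
           (fun t th => cis (k * th) * cis th * H' (w + RtoC t * cis th))%C a b t0 eta Heta).
  - intros t th Ht. apply curve_deriv_integrand. apply Hyp; auto.
  - intros th. apply cont2C_mult; [apply cont2C_mult; [apply cont2C_cis|]|].
    + intros eps He. destruct (cont2C_cis 1 t0 th eps He) as [d [Hd Hs]].
      exists d. split; auto. intros u v Hu Hv. specialize (Hs u v Hu Hv).
      rewrite !Rmult_1_l in Hs. exact Hs.
    + apply (cont2C_comp H' (fun a b => w + RtoC a * cis b)%C); [|apply cont2C_circle].
      apply Hyp. rewrite Rminus_eq_0, Rabs_R0; auto.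
  - intros t th Ht. apply curve_cont_mult; [apply curve_cont_cis|].
    apply (curve_cont_comp H (fun b => w + RtoC t * cis b)%C); [|apply curve_cont_circle].
    eapply cderiv_ccont. apply Hyp; auto.
Qed.

Lemma cis_neg_PI : cis (- PI) = cis PI.
Proof. unfold cis. rewrite cos_neg, sin_neg, sin_PI. f_equal. ring. Qed.

Lemma cis_int_PI (j m : nat) : cis ((INR j - INR m) * PI) = cis ((INR j - INR m) * - PI).
Proof.
  assert (Hs : forall n : nat, sin (INR n * PI) = 0).
  { intros n. apply sin_eq_0_1. exists (Z.of_nat n). rewrite INR_IZR_INZ. reflexivity. }
  unfold cis. f_equal.
  - replace ((INR j - INR m) * - PI) with (- ((INR j - INR m) * PI)) by ring.
    rewrite cos_neg; auto.
  - replace ((INR j - INR m) * - PI) with (INR m * PI - INR j * PI) by ring.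
    replace ((INR j - INR m) * PI) with (INR j * PI - INR m * PI) by ring.
    rewrite !sin_minus, !Hs. ring.
Qed.

Lemma CInt_periodic_deriv (q q' : R -> C) :
  (forall x, curve_deriv q x (q' x)) -> curve_cont_on q' (- PI) PI -> q PI = q (- PI) ->
  CInt q' (- PI) PI = RtoC 0.
Proof.
  intros Hq Hc Hp. rewrite (CInt_FTC q q'); auto. rewrite Hp. ring.
Qed.

Definition deriv_tower (g : nat -> C -> C) : Prop :=
  forall k z, in_disk z -> cderiv_at (g k) z (g (S k) z).

Section CauchyEstimate.

Variable g : nat -> C -> C.
Hypothesis Hg : deriv_tower g.

Lemma deriv_tower_ccont k z : in_disk z -> ccont (g k) z.
Proof. intros Hz. eapply cderiv_ccont, Hg, Hz. Qed.

Lemma in_disk_circle t th : Rabs t < 1 -> in_disk (RtoC 0 + RtoC t * cis th)%C.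
Proof.
  unfold in_disk. replace (RtoC 0 + RtoC t * cis th)%C with (RtoC 0 + RtoC t * cis th - RtoC 0)%C
    by ring. rewrite Cmod_circle. auto.
Qed.

Lemma circle_integrand_cont (k : R) j t : Rabs t < 1 ->
  curve_cont_on (fun th => cis (k * th) * g j (RtoC 0 + RtoC t * cis th))%C (- PI) PI.
Proof.
  intros Ht x _. apply curve_cont_mult; [apply curve_cont_cis|].
  apply (curve_cont_comp (g j) (fun b => RtoC 0 + RtoC t * cis b)%C); [|apply curve_cont_circle].
  apply deriv_tower_ccont, in_disk_circle; auto.
Qed.

Variable m : nat.

Definition circle_moment (j : nat) (t : R) : C :=
  CInt (fun th => cis ((INR j - INR m) * th) * g j (RtoC 0 + RtoC t * cis th))%C (- PI) PI.

Lemma circle_moment_deriv j t : Rabs t < 1 ->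
  curve_deriv (circle_moment j) t (circle_moment (S j) t).
Proof.
  intros Ht. eapply curve_deriv_eq.
  - apply (circle_integral_deriv_radius (g j) (g (S j)) (RtoC 0) (INR j - INR m) (- PI) PI t
             (1 - Rabs t)); [lra|].
    intros t' th Ht'.
    assert (Hd : Rabs t' < 1).
    { pose proof (Rabs_triang (t' - t) t). replace (t' - t + t) with t' in H by ring. lra. }
    split; [apply Hg|apply deriv_tower_ccont]; apply in_disk_circle; auto.
  - unfold circle_moment. apply CInt_ext. intros x _.
    rewrite <- cis_add, S_INR. f_equal. f_equal. ring.
Qed.

(* Integrating by parts in the angle: t M_1(t) = m M_0(t). *)
Lemma circle_moment_relation t : 0 < t < 1 ->
  (RtoC t * circle_moment 1 t)%C = (RtoC (INR m) * circle_moment 0 t)%C.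
Proof.
  intros Ht.
  assert (Hat : Rabs t < 1) by (rewrite Rabs_pos_eq; lra).
  set (k0 := INR 0 - INR m).
  set (p := fun s => (RtoC 0 + RtoC t * cis s)%C).
  set (f0 := fun s => (cis (k0 * s) * g 0%nat (p s))%C).
  set (f1 := fun s => (cis ((INR 1 - INR m) * s) * g 1%nat (p s))%C).
  assert (Hf1 : forall s, f1 s = (cis (k0 * s) * cis s * g 1%nat (p s))%C).
  { intros s. unfold f1, k0. rewrite <- cis_add. f_equal. f_equal. simpl. ring. }
  assert (Hc0 : curve_cont_on f0 (- PI) PI) by (apply circle_integrand_cont; auto).
  assert (Hc1 : curve_cont_on f1 (- PI) PI) by (apply circle_integrand_cont; auto).
  assert (Hs0 : curve_cont_on (fun x => RtoC k0 * f0 x)%C (- PI) PI)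
    by (intros x Hx; apply curve_cont_mult; auto using curve_cont_const).
  assert (Hs1 : curve_cont_on (fun x => RtoC t * f1 x)%C (- PI) PI)
    by (intros x Hx; apply curve_cont_mult; auto using curve_cont_const).
  (* the angular derivative of f0 is i (k0 f0 + t f1), and f0 is periodic *)
  assert (Hzero : CInt (fun s => Ci * (RtoC k0 * f0 s + RtoC t * f1 s))%C (- PI) PI = RtoC 0).
  { apply (CInt_periodic_deriv f0).
    - intros s. eapply curve_deriv_eq.
      + apply curve_deriv_mult; [apply curve_deriv_cis|].
        apply (chain_curve (g 0%nat) p); [apply Hg, in_disk_circle; auto|apply curve_deriv_circle].
      + rewrite Hf1. unfold f0, p. cbv beta. ring.
    - intros x Hx. apply curve_cont_mult; [apply curve_cont_const|].
      apply curve_cont_plus; auto.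
    - unfold f0, p. rewrite cis_neg_PI. unfold k0. rewrite cis_int_PI. reflexivity. }
  rewrite CInt_scal, CInt_plus, !CInt_scal in Hzero; auto.
  2:{ intros x Hx; apply curve_cont_plus; auto. }
  change (CInt f0 (- PI) PI) with (circle_moment 0 t) in Hzero.
  change (CInt f1 (- PI) PI) with (circle_moment 1 t) in Hzero.
  apply (f_equal (Cmult (- Ci))) in Hzero.
  replace (RtoC k0) with (- RtoC (INR m))%C in Hzero
    by (unfold k0; simpl INR; apply injective_projections; simpl; ring).
  apply (f_equal (fun z => z + RtoC (INR m) * circle_moment 0 t)%C) in Hzero.
  replace (- Ci * (Ci * (- RtoC (INR m) * circle_moment 0 t + RtoC t * circle_moment 1 t))
           + RtoC (INR m) * circle_moment 0 t)%C
    with (RtoC t * circle_moment 1 t)%C in Hzero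
    by (apply injective_projections; simpl; ring).
  rewrite Hzero. ring.
Qed.

Lemma const_of_deriv0 (f : R -> R) a b : (forall x, a < x < b -> is_derive f x 0) ->
  forall x y, a < x < b -> a < y < b -> f x = f y.
Proof.
  intros Hd x y Hx Hy.
  destruct (Rtotal_order x y) as [Hlt|[Heq|Hgt]].
  - destruct (MVT_cor2 f (fun _ => 0) x y Hlt) as [c [Hc _]];
      [intros c Hc; apply is_derive_Reals, Hd; lra|lra].
  - subst; auto.
  - destruct (MVT_cor2 f (fun _ => 0) y x Hgt) as [c [Hc _]];
      [intros c Hc; apply is_derive_Reals, Hd; lra|lra].
Qed.

Lemma circle_moment0_component (c : C -> R) r t : 0 < r < 1 -> 0 < t < 1 ->
  (forall x, 0 < x < 1 -> is_derive (fun s => c (circle_moment 0 s)) x (c (circle_moment 1 x))) ->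
  (forall (x : R) (u : C), c (RtoC x * u)%C = x * c u) ->
  c (circle_moment 0 t) = t ^ m / r ^ m * c (circle_moment 0 r).
Proof.
  intros Hr Ht Hd Cmul.
  assert (Hder : forall x, 0 < x < 1 -> is_derive (fun s => c (circle_moment 0 s) / s ^ m) x 0).
  { intros x Hx. eapply is_derive_eqv.
    - apply is_derive_div; [apply Hd; auto| |apply pow_nonzero; lra].
      apply (is_derive_pow (fun x => x) m x 1). apply (is_derive_id x).
    - pose proof (circle_moment_relation x Hx) as HR. apply (f_equal c) in HR.
      rewrite !Cmul in HR.
      assert (0 < x ^ m) by (apply pow_lt; lra).
      destruct m as [|m'].
      + simpl in HR. assert (c (circle_moment 1 x) = 0) by nra.
        rewrite H0. simpl. match goal with |- @eq _ ?a ?b => change (@eq R a b) end. field.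
      + rewrite S_INR in HR. simpl pred.
        replace (c (circle_moment 1 x) * x ^ S m' - c (circle_moment 0 x) * (INR (S m') * 1 * x ^ m'))
          with (x ^ m' * (x * c (circle_moment 1 x) - (INR m' + 1) * c (circle_moment 0 x)))
          by (rewrite S_INR; simpl; ring).
        rewrite HR. unfold Rdiv.
        match goal with |- @eq _ ?a ?b => change (@eq R a b) end. ring. }
  pose proof (const_of_deriv0 _ 0 1 Hder t r Ht Hr) as He. simpl in He.
  assert (0 < t ^ m) by (apply pow_lt; lra). assert (0 < r ^ m) by (apply pow_lt; lra).
  apply (Rmult_eq_compat_r (t ^ m)) in He.
  unfold Rdiv in *. rewrite Rmult_assoc, Rinv_l, Rmult_1_r in He by lra. rewrite He. ring.
Qed.

Lemma circle_moment0_homogeneous r t : 0 < r < 1 -> 0 < t < 1 ->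
  circle_moment 0 t = (RtoC (t ^ m / r ^ m) * circle_moment 0 r)%C.
Proof.
  intros Hr Ht.
  assert (Hd : forall x, 0 < x < 1 -> curve_deriv (circle_moment 0) x (circle_moment 1 x)).
  { intros x Hx. apply circle_moment_deriv. rewrite Rabs_pos_eq; lra. }
  apply injective_projections.
  - rewrite (circle_moment0_component fst r t); auto.
    + simpl. ring.
    + intros x Hx. apply (Hd x Hx).
    + intros x u; simpl; ring.
  - rewrite (circle_moment0_component snd r t); auto.
    + simpl. ring.
    + intros x Hx. apply (Hd x Hx).
    + intros x u; simpl; ring.
Qed.

Lemma curve_deriv_monomial (K : R) (n : nat) (C0 : C) t :
  curve_deriv (fun s => RtoC (K * s ^ n) * C0)%C t (RtoC (K * (INR n * t ^ pred n)) * C0)%C.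
Proof. split; simpl; auto_derive; auto; ring. Qed.

Lemma circle_moment_formula r : 0 < r < 1 ->
  forall j, (j <= m)%nat -> forall t, 0 < t < 1 ->
  circle_moment j t = (RtoC (INR (fact m) / INR (fact (m - j)) * t ^ (m - j))
                       * (RtoC (/ r ^ m) * circle_moment 0 r))%C.
Proof.
  intros Hr. induction j as [|j IH]; intros Hj t Ht.
  - rewrite (circle_moment0_homogeneous r t Hr Ht). rewrite Nat.sub_0_r.
    assert (INR (fact m) <> 0) by apply INR_fact_neq_0.
    assert (r ^ m <> 0) by (apply pow_nonzero; lra).
    apply injective_projections; simpl; field; auto.
  - set (d := Rmin t (1 - t)).
    assert (Hd : 0 < d) by (apply Rmin_pos; lra).
    assert (H1 : curve_deriv (circle_moment j) t (circle_moment (S j) t)).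
    { apply circle_moment_deriv. rewrite Rabs_pos_eq; lra. }
    assert (H2 : curve_deriv (fun s => RtoC (INR (fact m) / INR (fact (m - j)) * s ^ (m - j))
                                       * (RtoC (/ r ^ m) * circle_moment 0 r))%C t
                             (circle_moment (S j) t)).
    { apply (curve_deriv_ext_loc (circle_moment j) _ t _ d Hd); auto.
      intros s Hs. apply IH; [lia|].
      assert (Rabs (s - t) < t) by (eapply Rlt_le_trans; [exact Hs|apply Rmin_l]).
      assert (Rabs (s - t) < 1 - t) by (eapply Rlt_le_trans; [exact Hs|apply Rmin_r]).
      apply Rabs_def2 in H. apply Rabs_def2 in H0. lra. }
    rewrite (curve_deriv_unique _ _ _ _ H2
      (curve_deriv_monomial (INR (fact m) / INR (fact (m - j))) (m - j)
         (RtoC (/ r ^ m) * circle_moment 0 r)%C t)).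
    destruct (m - j)%nat as [|k] eqn:Hk; [lia|].
    assert (Hk' : (m - S j)%nat = k) by lia. rewrite Hk'. simpl pred.
    f_equal. f_equal. rewrite fact_simpl, mult_INR.
    assert (INR (fact k) <> 0) by apply INR_fact_neq_0.
    assert (INR (S k) <> 0) by (apply not_0_INR; lia).
    field. auto.
Qed.

(* Letting t -> 0 in the formula for j = m, by continuity of M_m at 0. *)
Lemma circle_moment_top_at0 r : 0 < r < 1 ->
  circle_moment m 0 = (RtoC (INR (fact m)) * (RtoC (/ r ^ m) * circle_moment 0 r))%C.
Proof.
  intros Hr.
  set (L := (RtoC (INR (fact m)) * (RtoC (/ r ^ m) * circle_moment 0 r))%C).
  assert (Hin : forall t, 0 < t < 1 -> circle_moment m t = L).
  { intros t Ht. rewrite (circle_moment_formula r Hr m (le_n m) t Ht). unfold L.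
    rewrite Nat.sub_diag. simpl. f_equal. f_equal. field. }
  assert (Hc : curve_cont (circle_moment m) 0).
  { eapply curve_deriv_cont. apply circle_moment_deriv. rewrite Rabs_R0; lra. }
  destruct (Req_dec (Cmod (circle_moment m 0 - L)) 0) as [H0|H0].
  - apply Cmod_eq_0 in H0. replace (circle_moment m 0) with ((circle_moment m 0 - L) + L)%C
      by ring. rewrite H0. ring.
  - exfalso. pose proof (Cmod_ge_0 (circle_moment m 0 - L)).
    destruct (Hc (Cmod (circle_moment m 0 - L))) as [d [Hd Hs]]; [lra|].
    set (t := Rmin (d / 2) (1 / 2)).
    assert (Ht : 0 < t < 1)
      by (unfold t; split; [apply Rmin_pos; lra|]; pose proof (Rmin_r (d/2) (1/2)); lra).
    assert (Htd : Rabs (t - 0) < d).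
    { rewrite Rminus_0_r, Rabs_pos_eq by lra. pose proof (Rmin_l (d/2) (1/2)). unfold t in *. lra. }
    specialize (Hs t Htd). rewrite Hin in Hs by auto. rewrite Cmod_sym in Hs. lra.
Qed.

Lemma circle_moment_top_value : circle_moment m 0 = (RtoC (2 * PI) * g m (RtoC 0))%C.
Proof.
  unfold circle_moment. rewrite (CInt_ext _ (fun _ => g m (RtoC 0))).
  - rewrite CInt_const. f_equal. f_equal. ring.
  - intros x _. rewrite Rminus_eq_0, Rmult_0_l, cis_0.
    replace (RtoC 0 + RtoC 0 * cis x)%C with (RtoC 0) by ring. ring.
Qed.

Lemma cauchy_estimate r B : 0 < r < 1 ->
  (forall z, Cmod z = r -> Cmod (g 0%nat z) <= B) ->
  Cmod (Cdiv (g m (RtoC 0)) (RtoC (INR (fact m)))) <= B / r ^ m.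
Proof.
  intros Hr HB.
  pose proof (circle_moment_top_at0 r Hr) as H1. rewrite circle_moment_top_value in H1.
  assert (Hf : INR (fact m) <> 0) by apply INR_fact_neq_0.
  assert (Hrm : 0 < r ^ m) by (apply pow_lt; lra).
  assert (Hpi : 0 < PI) by apply PI_RGT_0.
  assert (Eq : Cdiv (g m (RtoC 0)) (RtoC (INR (fact m)))
               = (RtoC (/ (2 * PI * r ^ m)) * circle_moment 0 r)%C).
  { assert (Hg0 : g m (RtoC 0) = (RtoC (/ (2 * PI)) * (RtoC (INR (fact m))
                     * (RtoC (/ r ^ m) * circle_moment 0 r)))%C).
    { rewrite <- H1. rewrite Cmult_assoc, <- RtoC_mult, Rinv_l by lra. ring. }
    rewrite Hg0. field_simplify_eq.
    - apply injective_projections; simpl; field; repeat split; lra.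
    - intro HH. apply (f_equal fst) in HH. simpl in HH. auto. }
  assert (Hb : Cmod (circle_moment 0 r) <= (PI - - PI) * B).
  { apply CInt_bound; [lra|apply circle_integrand_cont; rewrite Rabs_pos_eq; lra|].
    intros x _. rewrite Cmod_mult. simpl INR. rewrite Cmod_cis, Rmult_1_l. apply HB.
    replace (RtoC 0 + RtoC r * cis x)%C with (RtoC 0 + RtoC r * cis x - RtoC 0)%C by ring.
    rewrite Cmod_circle, Rabs_pos_eq; lra. }
  rewrite Eq, Cmod_mult, Cmod_R.
  rewrite Rabs_pos_eq by (apply Rlt_le, Rinv_0_lt_compat; nra).
  apply Rle_trans with (/ (2 * PI * r ^ m) * ((PI - - PI) * B)).
  - apply Rmult_le_compat_l; auto. apply Rlt_le, Rinv_0_lt_compat; nra.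
  - right. field. split; lra.
Qed.

End CauchyEstimate.

(** * Mean value property and maximum principle *)

Section MeanValue.

Variables (H H' : C -> C) (w : C) (d2 : R).
Hypothesis Hreg : forall z, Cmod (z - w) < d2 -> cderiv_at H z (H' z) /\ ccont H' z.

Lemma circle_point_in_disk t th : Rabs t < d2 -> Cmod (w + RtoC t * cis th - w)%C < d2.
Proof. rewrite Cmod_circle. auto. Qed.

(* On each circle of radius t, \int cis th * H'(w + t cis th) dth = 0, being the
   integral of the angular derivative of th |-> H(w + t cis th) divided by i t. *)
Lemma circle_integral_deriv_zero t : 0 < t < d2 ->
  CInt (fun th => cis (0 * th) * cis th * H' (w + RtoC t * cis th))%C (- PI) PI = RtoC 0.
Proof.
  intros Ht.
  assert (Hin : forall s, Cmod (w + RtoC t * cis s - w)%C < d2)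
    by (intros s; apply circle_point_in_disk; rewrite Rabs_pos_eq; lra).
  set (F := fun s => (cis (0 * s) * cis s * H' (w + RtoC t * cis s))%C).
  assert (HF : curve_cont_on F (- PI) PI).
  { intros x _. apply curve_cont_mult; [apply curve_cont_mult; [apply curve_cont_cis|apply curve_cont_cis1]|].
    - apply (curve_cont_comp H' (fun s => w + RtoC t * cis s)%C); [apply Hreg, Hin|].
      apply curve_cont_circle. }
  assert (Hz : CInt (fun s => RtoC t * Ci * F s)%C (- PI) PI = RtoC 0).
  { apply (CInt_periodic_deriv (fun s => H (w + RtoC t * cis s)%C)).
    - intros s. eapply curve_deriv_eq.
      + apply (chain_curve H (fun s => w + RtoC t * cis s)%C); [apply Hreg, Hin|].
        apply curve_deriv_circle.
      + unfold F. rewrite Rmult_0_l, cis_0. ring.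
    - intros x Hx. apply curve_cont_mult; [apply curve_cont_const|apply HF; auto].
    - rewrite cis_neg_PI. reflexivity. }
  rewrite CInt_scal in Hz by auto.
  assert (Hnz : (RtoC t * Ci)%C <> RtoC 0).
  { intro HH. apply (f_equal snd) in HH. simpl in HH. lra. }
  apply (f_equal (Cmult (/ (RtoC t * Ci)))) in Hz.
  rewrite Cmult_assoc, Cinv_l, Cmult_1_l in Hz by auto. rewrite Hz. ring.
Qed.

Lemma mean_value_property dl : 0 < dl < d2 ->
  CInt (fun th => H (w + RtoC dl * cis th))%C (- PI) PI = (RtoC (2 * PI) * H w)%C.
Proof.
  intros Hd.
  set (Psi := fun t => CInt (fun th => cis (0 * th) * H (w + RtoC t * cis th))%C (- PI) PI).
  set (Psi' := fun t =>
    CInt (fun th => cis (0 * th) * cis th * H' (w + RtoC t * cis th))%C (- PI) PI).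
  assert (Hder : forall t, 0 <= t <= dl -> curve_deriv Psi t (Psi' t)).
  { intros t Ht. apply (circle_integral_deriv_radius H H' w 0 (- PI) PI t (d2 - Rabs t));
      [rewrite Rabs_pos_eq; lra|].
    intros t' th Ht'. apply Hreg, circle_point_in_disk.
    pose proof (Rabs_triang (t' - t) t). replace (t' - t + t) with t' in H0 by ring. lra. }
  assert (Hzero : forall c, 0 < c < dl -> Psi' c = RtoC 0)
    by (intros c Hc; apply circle_integral_deriv_zero; lra).
  assert (Heq : Psi dl = Psi 0).
  { apply injective_projections.
    - destruct (MVT_cor2 (fun s => fst (Psi s)) (fun s => fst (Psi' s)) 0 dl) as [c [Hc1 Hc2]];
        [lra|intros c Hc; apply is_derive_Reals, (Hder c Hc)|].
      rewrite Hzero in Hc1 by lra. change (fst (RtoC 0)) with 0 in Hc1. lra.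
    - destruct (MVT_cor2 (fun s => snd (Psi s)) (fun s => snd (Psi' s)) 0 dl) as [c [Hc1 Hc2]];
        [lra|intros c Hc; apply is_derive_Reals, (Hder c Hc)|].
      rewrite Hzero in Hc1 by lra. change (snd (RtoC 0)) with 0 in Hc1. lra. }
  assert (HP0 : Psi 0 = (RtoC (2 * PI) * H w)%C).
  { unfold Psi. rewrite (CInt_ext _ (fun _ => H w)).
    - rewrite CInt_const. f_equal. f_equal. ring.
    - intros x _. rewrite Rmult_0_l, cis_0. replace (w + RtoC 0 * cis x)%C with w by ring. ring. }
  rewrite <- HP0, <- Heq. unfold Psi. apply CInt_ext. intros x _. rewrite Rmult_0_l, cis_0. ring.
Qed.

Lemma circle_max_constant dl Mx : 0 < dl < d2 ->
  (forall th, Cmod (H (w + RtoC dl * cis th)%C) <= Mx) -> Cmod (H w) = Mx ->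
  forall th, - PI <= th <= PI -> Cmod (H (w + RtoC dl * cis th)%C) = Mx.
Proof.
  intros Hd Hle HM.
  assert (Hpi : 0 < PI) by apply PI_RGT_0.
  apply CInt_bound_equality; [lra| |intros; apply Hle|].
  - intros x _. apply (curve_cont_comp H (fun s => w + RtoC dl * cis s)%C);
      [|apply curve_cont_circle].
    eapply cderiv_ccont. apply Hreg, circle_point_in_disk. rewrite Rabs_pos_eq; lra.
  - rewrite mean_value_property, Cmod_mult, Cmod_R, Rabs_pos_eq, HM by lra. ring.
Qed.

End MeanValue.

Lemma cis_onto (u : C) : Cmod u = 1 -> exists th, - PI <= th <= PI /\ cis th = u.
Proof.
  intros Hu. destruct u as [x y].
  assert (Hxy : x * x + y * y = 1).
  { pose proof (Cmod_sqr (x, y)) as Hs. rewrite Hu in Hs. simpl in Hs. lra. }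
  assert (Hx : -1 <= x <= 1) by nra.
  pose proof (acos_bound x).
  assert (Hs : sqrt (1 - x²) = Rabs y).
  { rewrite <- sqrt_Rsqr_abs. f_equal. unfold Rsqr. lra. }
  destruct (Rle_or_lt 0 y) as [Hy|Hy].
  - exists (acos x). split; [lra|]. unfold cis.
    rewrite cos_acos, sin_acos by auto. rewrite Hs, Rabs_pos_eq; auto.
  - exists (- acos x). split; [lra|]. unfold cis.
    rewrite cos_neg, sin_neg, cos_acos, sin_acos by auto.
    rewrite Hs, Rabs_left; auto. f_equal. ring.
Qed.

Lemma polar_form (z : C) : z <> RtoC 0 ->
  exists th, - PI <= th <= PI /\ z = (RtoC (Cmod z) * cis th)%C.
Proof.
  intros Hz. assert (Hm : 0 < Cmod z) by (apply (proj1 (Cmod_gt_0 _)); auto).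
  destruct (cis_onto (RtoC (/ Cmod z) * z)%C) as [th [Hth Eth]].
  { rewrite Cmod_mult, Cmod_R, Rabs_pos_eq; [field; lra|]. apply Rlt_le, Rinv_0_lt_compat; lra. }
  exists th. split; auto. rewrite Eth.
  apply injective_projections; simpl; field; lra.
Qed.

(** * Maxima of continuous functions on rectangles and annuli *)

Definition cont2R (h : R -> R -> R) u v : Prop :=
  forall eps, 0 < eps -> exists d, 0 < d /\
    forall u' v', Rabs (u' - u) < d -> Rabs (v' - v) < d -> Rabs (h u' v' - h u v) < eps.

Definition clamp a b x := Rmax a (Rmin b x).

Lemma clamp_in a b x : a <= b -> a <= clamp a b x <= b.
Proof. intros. unfold clamp. apply Rmax_case_strong; apply Rmin_case_strong; intros; lra. Qed.

Lemma clamp_id a b x : a <= x <= b -> clamp a b x = x.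
Proof. intros. unfold clamp. rewrite Rmin_right by lra. rewrite Rmax_right; lra. Qed.

Lemma clamp_lip a b x y : a <= b -> Rabs (clamp a b x - clamp a b y) <= Rabs (x - y).
Proof.
  intros. unfold clamp.
  repeat (apply Rmax_case_strong || apply Rmin_case_strong); intros;
  repeat match goal with |- context [Rabs ?z] =>
    first [rewrite (Rabs_pos_eq z) by lra | rewrite (Rabs_left1 z) by lra] end;
  try (match goal with |- context [Rabs ?z] => destruct (Rle_or_lt 0 z);
    [rewrite (Rabs_pos_eq z) by lra | rewrite (Rabs_left z) by lra] end); lra.
Qed.

Lemma uniform_cont2 h a b c d : a <= b -> c <= d ->
  (forall u v, a <= u <= b -> c <= v <= d -> cont2R h u v) ->
  forall eps, 0 < eps -> exists dl, 0 < dl /\ forall x y x' y',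
    a <= x <= b -> c <= y <= d -> a <= x' <= b -> c <= y' <= d ->
    Rabs (x - x') < dl -> Rabs (y - y') < dl -> Rabs (h x y - h x' y') < eps.
Proof.
  intros Hab Hcd Hc eps He.
  assert (Hg : forall u v, {dl : posreal | forall u' v',
     Rabs (u' - clamp a b u) < dl -> Rabs (v' - clamp c d v) < dl ->
     Rabs (h u' v' - h (clamp a b u) (clamp c d v)) < eps / 2}).
  { intros u v. apply constructive_indefinite_description.
    destruct (Hc (clamp a b u) (clamp c d v) (clamp_in a b u Hab) (clamp_in c d v Hcd) (eps/2))
      as [dl [Hdl H]]; [lra|].
    exists (mkposreal dl Hdl). exact H. }
  set (gauge := fun u v => proj1_sig (Hg u v)).
  assert (Hgp : forall u v, 0 < gauge u v / 2) by (intros; pose proof (cond_pos (gauge u v)); lra).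
  destruct (compactness_value_2d a b c d (fun u v => mkposreal _ (Hgp u v))) as [dl Hdl].
  exists dl. split; [apply cond_pos|].
  intros x y x' y' Hx Hy Hx' Hy' Hxx Hyy.
  specialize (Hdl x y Hx Hy).
  apply NNPP in Hdl. destruct Hdl as [u [v [Hu [Hv [H1 [H2 H3]]]]]]. simpl in H1, H2, H3.
  unfold gauge in *. set (s := Hg u v) in *. clearbody s. destruct s as [g0 Hp]. simpl in *.
  pose proof (cond_pos g0) as Hgpos.
  rewrite (clamp_id a b u Hu), (clamp_id c d v Hv) in Hp.
  assert (A1 : Rabs (h x y - h u v) < eps / 2) by (apply Hp; lra).
  assert (A2 : Rabs (h x' y' - h u v) < eps / 2).
  { apply Hp.
    - pose proof (Rabs_triang (x' - x) (x - u)). replace (x' - x + (x - u)) with (x' - u) in H by ring.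
      rewrite Rabs_minus_sym in Hxx. lra.
    - pose proof (Rabs_triang (y' - y) (y - v)). replace (y' - y + (y - v)) with (y' - v) in H by ring.
      rewrite Rabs_minus_sym in Hyy. lra. }
  pose proof (Rabs_triang (h x y - h u v) (h u v - h x' y')) as T.
  replace (h x y - h u v + (h u v - h x' y')) with (h x y - h x' y') in T by ring.
  rewrite Rabs_minus_sym in A2. lra.
Qed.

(* Extreme value theorem on a rectangle: maximize in v for each u, then in u. *)
Lemma extreme_value_2d h a b c d : a <= b -> c <= d ->
  (forall u v, a <= u <= b -> c <= v <= d -> cont2R h u v) ->
  exists u0 v0, a <= u0 <= b /\ c <= v0 <= d /\
    forall u v, a <= u <= b -> c <= v <= d -> h u v <= h u0 v0.
Proof.
  intros Hab Hcd Hc.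
  (* h extended to the plane by clamping is uniformly continuous *)
  set (ht := fun u v => h (clamp a b u) (clamp c d v)).
  assert (Hu : forall eps, 0 < eps -> exists dl, 0 < dl /\ forall x y x' y',
     Rabs (x - x') < dl -> Rabs (y - y') < dl -> Rabs (ht x y - ht x' y') < eps).
  { intros eps He. destruct (uniform_cont2 h a b c d Hab Hcd Hc eps He) as [dl [Hdl H]].
    exists dl. split; auto. intros. unfold ht. apply H; try apply clamp_in; auto;
      (eapply Rle_lt_trans; [apply clamp_lip; auto|auto]). }
  assert (Hv : forall t, {v | c <= v <= d /\ forall v', c <= v' <= d -> ht t v' <= ht t v}).
  { intros t. apply constructive_indefinite_description.
    destruct (continuity_ab_maj (ht t) c d Hcd) as [v [Hv1 Hv2]].
    - intros v _. apply continuity_pt_of_eps. intros eps He. destruct (Hu eps He) as [dl [Hdl H]].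
      exists dl; split; auto. intros y Hy. apply H; auto. rewrite Rminus_eq_0, Rabs_R0; auto.
    - exists v. split; auto. }
  set (M := fun t => ht t (proj1_sig (Hv t))).
  assert (HM : forall t, continuity_pt M t).
  { intros t. apply continuity_pt_of_eps. intros eps He.
    destruct (Hu (eps / 2)) as [dl [Hdl H]]; [lra|].
    exists dl; split; auto. intros y Hy.
    destruct (proj2_sig (Hv t)) as [Ht1 Ht2]. destruct (proj2_sig (Hv y)) as [Hy1 Hy2].
    unfold M.
    set (vt := proj1_sig (Hv t)) in *. set (vy := proj1_sig (Hv y)) in *.
    assert (Rabs (ht y vt - ht t vt) < eps / 2) by (apply H; auto; rewrite Rminus_eq_0, Rabs_R0; auto).
    assert (Rabs (ht y vy - ht t vy) < eps / 2) by (apply H; auto; rewrite Rminus_eq_0, Rabs_R0; auto).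
    specialize (Ht2 vy Hy1). specialize (Hy2 vt Ht1).
    apply Rabs_def2 in H0. apply Rabs_def2 in H1. apply Rabs_def1; lra. }
  destruct (continuity_ab_maj M a b Hab) as [t0 [Ht0 Ht0b]]; [intros; apply HM|].
  destruct (proj2_sig (Hv t0)) as [Hv0 Hv0'].
  exists t0, (proj1_sig (Hv t0)). split; auto. split; auto.
  intros u v Hu' Hv'.
  specialize (Ht0 u Hu'). unfold M in Ht0.
  destruct (proj2_sig (Hv u)) as [Hvu1 Hvu]. specialize (Hvu v Hv').
  set (vt0 := proj1_sig (Hv t0)) in *.
  assert (E1 : ht u v = h u v) by (unfold ht; rewrite (clamp_id a b u), (clamp_id c d v); auto).
  assert (E2 : ht t0 vt0 = h t0 vt0)
    by (unfold ht; rewrite (clamp_id a b t0), (clamp_id c d vt0); auto).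
  lra.
Qed.

Lemma annulus_max (G : C -> C) a b : 0 < a <= b ->
  (forall z, a <= Cmod z <= b -> ccont G z) ->
  exists w, a <= Cmod w <= b /\ forall z, a <= Cmod z <= b -> Cmod (G z) <= Cmod (G w).
Proof.
  intros Hab Hc.
  set (h := fun u v => Cmod (G (RtoC u * cis v)%C)).
  assert (Hcont : forall u v, a <= u <= b -> - PI <= v <= PI -> cont2R h u v).
  { intros u v Hu Hv eps He.
    assert (Hc2 : cont2C (fun u v => G (RtoC 0 + RtoC u * cis v)%C) u v).
    { apply (cont2C_comp G (fun u v => RtoC 0 + RtoC u * cis v)%C); [|apply cont2C_circle].
      apply Hc. replace (RtoC 0 + RtoC u * cis v)%C with (RtoC u * cis v)%C by ring.
      rewrite Cmod_polar_point; lra. }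
    destruct (Hc2 eps He) as [dl [Hdl0 Hdl1]]. exists dl; split; auto.
    intros u' v' Hu' Hv'. specialize (Hdl1 u' v' Hu' Hv').
    unfold h. rewrite <- (Cplus_0_l (RtoC u' * cis v')), <- (Cplus_0_l (RtoC u * cis v)).
    pose proof (Cmod_tri3 (G (RtoC 0 + RtoC u' * cis v')%C) (G (RtoC 0 + RtoC u * cis v)%C)).
    pose proof (Cmod_tri3 (G (RtoC 0 + RtoC u * cis v)%C) (G (RtoC 0 + RtoC u' * cis v')%C)) as T.
    rewrite Cmod_sym in T. apply Rabs_def1; lra. }
  destruct (extreme_value_2d h a b (- PI) PI) as [u0 [v0 [Hu0 [Hv0 Hmax]]]];
    [lra|pose proof PI_RGT_0; lra|exact Hcont|].
  exists (RtoC u0 * cis v0)%C. rewrite Cmod_polar_point by lra. split; auto.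
  intros z Hz. destruct (polar_form z) as [th [Hth Ez]].
  - apply (proj2 (Cmod_gt_0 _)). lra.
  - rewrite Ez. apply Hmax; lra.
Qed.

(* A connectedness argument on [t1, 1]: a closed set containing 1 from
   which every point s > t1 can be left to the left contains t1. *)
Lemma closed_leftward_propagation (f : R -> R) t1 M : t1 <= 1 ->
  (forall s, t1 <= s <= 1 -> continuity_pt f s) -> f 1 = M ->
  (forall s, t1 < s <= 1 -> f s = M -> exists s', t1 <= s' < s /\ f s' = M) ->
  f t1 = M.
Proof.
  intros Ht1 Hc H1 Hstep.
  set (S := fun s => t1 <= s <= 1 /\ f s = M).
  (* ts is the infimum of S, obtained as minus the supremum of -S *)
  destruct (completeness (fun y => S (- y))) as [m [Hub Hlub]].
  { exists (- t1). intros y [Hy _]. lra. }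
  { exists (-1). split; [lra|]. replace (- -1) with 1 by ring. exact H1. }
  set (ts := - m).
  assert (Hinf : forall s, S s -> ts <= s).
  { intros s Hs. assert (- s <= m) by (apply Hub; rewrite Ropp_involutive; auto). unfold ts; lra. }
  assert (Happrox : forall eta, 0 < eta -> exists s, S s /\ s < ts + eta).
  { intros eta He. apply NNPP. intro Hn.
    assert (m <= m - eta); [|lra].
    apply Hlub. intros y Hy. destruct (Rle_or_lt y (m - eta)) as [|Hlt]; auto.
    exfalso. apply Hn. exists (- y). split; auto. unfold ts; lra. }
  assert (Hts1 : ts <= 1) by (apply Hinf; split; [lra|auto]).
  assert (Htst1 : t1 <= ts).
  { destruct (Happrox 1 Rlt_0_1) as [s [[Hs1 _] _]].
    destruct (Rle_or_lt t1 ts); auto. exfalso.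
    assert (m <= - t1) by (apply Hlub; intros y [Hy _]; lra). unfold ts in *; lra. }
  (* S is closed, so ts belongs to S *)
  assert (Hts : f ts = M).
  { destruct (Req_dec (f ts) M) as [|Hn]; auto. exfalso.
    set (e := Rabs (f ts - M)).
    assert (He : 0 < e) by (apply Rabs_pos_lt; lra).
    destruct (continuity_pt_to_eps _ ts (Hc ts (conj Htst1 Hts1)) e He) as [dl [Hdl Hcl]].
    destruct (Happrox dl Hdl) as [s [[Hs1 Hs2] Hs3]].
    assert (ts <= s) by (apply Hinf; split; auto).
    assert (Hsts : Rabs (s - ts) < dl) by (rewrite Rabs_pos_eq; lra).
    specialize (Hcl s Hsts). rewrite Hs2 in Hcl. unfold e in Hcl.
    rewrite Rabs_minus_sym in Hcl. lra. }
  destruct Htst1 as [Hlt|Heq]; [|rewrite Heq; auto].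
  destruct (Hstep ts (conj Hlt Hts1) Hts) as [s' [Hs' Hs'M]].
  assert (ts <= s') by (apply Hinf; split; [lra|auto]). lra.
Qed.

Section MaxAlongRay.

Variables (H H' : C -> C) (z0 : C) (R1 Mx : R).
Hypothesis Hyp : forall z, 0 < Cmod z < 1 -> cderiv_at H z (H' z) /\ ccont H' z.
Hypothesis Hz0 : 0 < Cmod z0 < R1.
Hypothesis HR1 : R1 < 1.
Hypothesis Hb : forall z, 0 < Cmod z <= R1 -> Cmod (H z) <= Mx.

(* If the maximum is attained at s z0, it is attained at some s' z0 slightly
   closer to 0: on a small circle around s z0 the circle maximum principle
   gives |H| = Mx, and that circle meets the segment [0, s z0]. *)
Lemma max_moves_toward_origin s eta : 0 < s <= 1 -> 0 < eta ->
  Cmod (H (RtoC s * z0)%C) = Mx -> exists s', s - eta <= s' < s /\ Cmod (H (RtoC s' * z0)%C) = Mx.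
Proof.
  intros Hs Heta HMs.
  set (r0 := Cmod z0) in *.
  set (w := (RtoC s * z0)%C) in *.
  assert (Hw : Cmod w = s * r0) by (unfold w, r0; rewrite Cmod_mult, Cmod_R, Rabs_pos_eq; lra).
  assert (Hw' : 0 < Cmod w <= r0) by (rewrite Hw; split; nra).
  set (d2 := Rmin (Cmod w) (R1 - Cmod w)).
  assert (Hd2 : 0 < d2) by (apply Rmin_pos; lra).
  set (dl := Rmin (d2 / 2) (eta * r0)).
  assert (Hdl : 0 < dl < d2).
  { split; [apply Rmin_pos; nra|]. eapply Rle_lt_trans; [apply Rmin_l|lra]. }
  assert (Hreg : forall z, Cmod (z - w) < d2 -> 0 < Cmod z < R1).
  { intros z Hz. pose proof (Cmod_tri3 w z) as T1. pose proof (Cmod_tri3 z w) as T2.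
    rewrite Cmod_sym in T1.
    pose proof (Rmin_l (Cmod w) (R1 - Cmod w)) as M1.
    pose proof (Rmin_r (Cmod w) (R1 - Cmod w)) as M2.
    fold d2 in M1, M2. lra. }
  (* the point of the circle around w closest to 0 lies on the segment *)
  destruct (cis_onto (RtoC (- / r0) * z0)%C) as [th [Hth Eth]].
  { rewrite Cmod_mult, Cmod_R, Rabs_left; fold r0; [field; lra|].
    apply Ropp_lt_gt_0_contravar, Rinv_0_lt_compat; lra. }
  assert (Hpt : (w + RtoC dl * cis th)%C = (RtoC (s - dl / r0) * z0)%C).
  { rewrite Eth. unfold w. apply injective_projections; simpl; field; lra. }
  exists (s - dl / r0). split.
  - assert (dl <= eta * r0) by apply Rmin_r.
    assert (0 < dl / r0) by (apply Rdiv_lt_0_compat; lra).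
    assert (dl / r0 <= eta); [|lra].
    apply (Rmult_le_reg_r r0); [lra|]. unfold Rdiv. rewrite Rmult_assoc, Rinv_l; lra.
  - rewrite <- Hpt. apply (circle_max_constant H H' w d2); auto.
    + intros z Hz. apply Hyp. pose proof (Hreg z Hz). lra.
    + intros th'. apply Hb.
      pose proof (Hreg _ (circle_point_in_disk w d2 dl th' ltac:(rewrite Rabs_pos_eq; lra))).
      lra.
Qed.

Lemma max_along_ray : Cmod (H z0) = Mx ->
  forall t, 0 < t <= 1 -> Cmod (H (RtoC t * z0)%C) = Mx.
Proof.
  intros HM t1 Ht1.
  apply (closed_leftward_propagation (fun s => Cmod (H (RtoC s * z0)%C))); [lra| | |].
  - intros s Hs. apply curve_cont_Cmod, (curve_cont_comp H (fun s => RtoC s * z0)%C).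
    + eapply cderiv_ccont. apply Hyp. rewrite Cmod_mult, Cmod_R, Rabs_pos_eq by lra.
      split; [nra|]. assert (s * Cmod z0 <= Cmod z0) by nra. lra.
    + eapply curve_deriv_cont. apply (curve_deriv_ext (fun s => RtoC 0 + RtoC s * z0)%C).
      * intros; ring.
      * apply curve_deriv_line.
  - rewrite Cmult_1_l. exact HM.
  - intros s Hs HMs. destruct (max_moves_toward_origin s (s - t1)) as [s' [Hs' HM']];
      auto; try lra.
    exists s'. split; [lra|auto].
Qed.

End MaxAlongRay.

(** * A strict Schwarz lemma *)

Lemma bernoulli (x : R) (n : nat) : 0 <= x <= 1 -> 1 - INR n * x <= (1 - x) ^ n.
Proof.
  intros Hx. induction n.
  - simpl. lra.
  - rewrite S_INR. simpl. assert (0 <= 1 - x) by lra.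
    assert (0 <= INR n) by apply pos_INR. nra.
Qed.

Lemma radius_with_small_inverse_power (n : nat) (r L : R) : 0 <= r < 1 -> 1 < L ->
  exists R1, r < R1 < 1 /\ / R1 ^ n < L.
Proof.
  intros Hr HL.
  set (x := Rmin ((1 - r) / 2) ((1 - / L) / (INR n + 1))).
  assert (HL' : 0 < / L < 1).
  { split; [apply Rinv_0_lt_compat; lra|]. rewrite <- Rinv_1. apply Rinv_lt_contravar; lra. }
  assert (Hnp : 0 < INR n + 1) by (pose proof (pos_INR n); lra).
  assert (Hx : 0 < x) by (apply Rmin_pos; [lra|apply Rdiv_lt_0_compat; lra]).
  assert (Hx1 : x <= (1 - r) / 2) by apply Rmin_l.
  assert (Hx2 : x <= (1 - / L) / (INR n + 1)) by apply Rmin_r.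
  exists (1 - x). split; [lra|].
  pose proof (bernoulli x n ltac:(lra)).
  assert (INR n * x < 1 - / L).
  { apply Rle_lt_trans with (INR n * ((1 - / L) / (INR n + 1))).
    - apply Rmult_le_compat_l; auto. apply pos_INR.
    - apply (Rmult_lt_reg_r (INR n + 1)); auto. unfold Rdiv.
      rewrite Rmult_assoc, (Rmult_assoc (1 - / L)), Rinv_l, Rmult_1_r by lra.
      pose proof (pos_INR n). nra. }
  assert (0 < (1 - x) ^ n) by (apply pow_lt; lra).
  rewrite <- (Rinv_inv L). apply Rinv_lt_contravar; [apply Rmult_lt_0_compat|]; lra.
Qed.

Section Schwarz.

Variables (phi : C -> C) (g : nat -> C -> C) (n : nat) (d : C).
Hypothesis Hmaps : forall z, in_disk z -> in_disk (phi z).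
Hypothesis Hphi0 : phi (RtoC 0) = RtoC 0.
Hypothesis Hd : cderiv_at phi (RtoC 0) d.
Hypothesis Hdl : Cmod d < 1.
Hypothesis Hn : (1 <= n)%nat.
Hypothesis Hg : deriv_tower g.
Hypothesis Hg0 : g 0%nat = (fun z => cpow (phi z) n).

Definition schwarz_quotient (z : C) : C := (g 0%nat z * / cpow z n)%C.

Definition schwarz_quotient_deriv (z : C) : C :=
  (g 1%nat z * / cpow z n
   + g 0%nat z * (RtoC (INR n) * cpow z (pred n) * RtoC 1 * - / (cpow z n * cpow z n)))%C.

Lemma nonzero_of_Cmod_pos (z : C) : 0 < Cmod z -> z <> RtoC 0.
Proof. intros Hz. apply (proj2 (Cmod_gt_0 _)); auto. Qed.

Lemma schwarz_quotient_regular z : 0 < Cmod z < 1 ->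
  cderiv_at schwarz_quotient z (schwarz_quotient_deriv z) /\ ccont schwarz_quotient_deriv z.
Proof.
  intros Hz.
  assert (Hz0 : z <> RtoC 0) by (apply nonzero_of_Cmod_pos; lra).
  assert (Hd0 : in_disk z) by (unfold in_disk; lra).
  assert (Hp : cpow z n <> RtoC 0) by (apply cpow_nz; auto).
  assert (Hpow : ccont (fun w => cpow w n) z) by (apply (ccont_cpow (fun w => w)), ccont_id).
  split.
  - unfold schwarz_quotient, schwarz_quotient_deriv. eapply cderiv_eq.
    + apply cderiv_mult; [apply Hg, Hd0|].
      apply (cderiv_comp Cinv (fun w => cpow w n)); [apply cderiv_inv; auto|].
      apply (cderiv_cpow (fun w => w)), cderiv_id.
    + cbv beta. ring.
  - unfold schwarz_quotient_deriv.
    apply ccont_plus; apply ccont_mult; try (apply deriv_tower_ccont; auto).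
    + apply ccont_inv; auto.
    + repeat apply ccont_mult; try apply ccont_const.
      * apply (ccont_cpow (fun w => w)), ccont_id.
      * apply ccont_opp, ccont_inv; [apply ccont_mult; auto|].
        intro HH. apply (f_equal Cmod) in HH. rewrite Cmod_mult, Cmod_0 in HH.
        apply (proj1 (Cmod_gt_0 _)) in Hp. nra.
Qed.

Lemma schwarz_quotient_modulus z : z <> RtoC 0 ->
  Cmod (schwarz_quotient z) = Cmod (phi z) ^ n / Cmod z ^ n.
Proof.
  intros Hz. unfold schwarz_quotient. rewrite Hg0, Cmod_mult, Cmod_inv, !Cmod_cpow; auto.
  apply cpow_nz; auto.
Qed.

Lemma pow_lt_1 x : 0 <= x < 1 -> x ^ n < 1.
Proof. intros Hx. apply pow_lt_1_compat; auto; lia. Qed.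

(* Near 0, |phi z| <= (1 + |d|)/2 |z|, so |G| < 1. *)
Lemma schwarz_quotient_near_zero :
  exists e0, 0 < e0 < 1 /\ forall z, 0 < Cmod z <= e0 -> Cmod (schwarz_quotient z) < 1.
Proof.
  pose proof (cderiv_to_eps _ _ _ Hd) as He. pose proof (Cmod_ge_0 d).
  destruct (He ((1 - Cmod d) / 2)) as [dl [Hdl0 Hdl1]]; [lra|].
  exists (Rmin (dl / 2) (1 / 2)).
  pose proof (Rmin_l (dl/2) (1/2)). pose proof (Rmin_r (dl/2) (1/2)).
  split; [split; [apply Rmin_pos|]; lra|].
  intros z Hz.
  assert (Hz1 : Cmod (z - RtoC 0) < dl) by (replace (z - RtoC 0)%C with z by ring; lra).
  specialize (Hdl1 z Hz1). rewrite Hphi0 in Hdl1.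
  replace (phi z - RtoC 0 - d * (z - RtoC 0))%C with (phi z - d * z)%C in Hdl1 by ring.
  replace (z - RtoC 0)%C with z in Hdl1 by ring.
  pose proof (Cmod_tri3 (phi z) (d * z)) as T. rewrite Cmod_mult in T.
  assert (Hr : Cmod (phi z) <= (1 + Cmod d) / 2 * Cmod z) by nra.
  rewrite schwarz_quotient_modulus by (apply nonzero_of_Cmod_pos; lra).
  assert (0 < Cmod z ^ n) by (apply pow_lt; lra).
  apply (Rmult_lt_reg_r (Cmod z ^ n)); auto.
  unfold Rdiv. rewrite Rmult_assoc, Rinv_l, Rmult_1_r, Rmult_1_l by lra.
  apply Rle_lt_trans with (((1 + Cmod d) / 2 * Cmod z) ^ n).
  - apply pow_incr. split; auto. apply Cmod_ge_0.
  - rewrite Rpow_mult_distr.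
    assert (((1 + Cmod d) / 2) ^ n < 1) by (apply pow_lt_1; lra). nra.
Qed.

Lemma schwarz_quotient_on_circle R1 z : 0 < R1 < 1 -> Cmod z = R1 ->
  Cmod (schwarz_quotient z) < / R1 ^ n.
Proof.
  intros HR Hz. rewrite schwarz_quotient_modulus by (apply nonzero_of_Cmod_pos; lra).
  rewrite Hz.
  assert (Cmod (phi z) ^ n < 1)
    by (apply pow_lt_1; split; [apply Cmod_ge_0|apply Hmaps; unfold in_disk; lra]).
  assert (0 < R1 ^ n) by (apply pow_lt; lra). unfold Rdiv.
  apply (Rmult_lt_compat_r (/ R1 ^ n)) in H; [lra|apply Rinv_0_lt_compat; auto].
Qed.

Lemma schwarz_quotient_le_1 z0 : 0 < Cmod z0 < 1 -> Cmod (schwarz_quotient z0) <= 1.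
Proof.
  intros Hz0. apply Rnot_lt_le. intro HL. set (L := Cmod (schwarz_quotient z0)) in *.
  destruct schwarz_quotient_near_zero as [e0 [He0 Hnear]].
  destruct (radius_with_small_inverse_power n (Cmod z0) L) as [R1 [HR1 HR1n]]; [lra|lra|].
  (* the maximum Mx >= L of |G| on e1 <= |z| <= R1 is interior *)
  set (e1 := Rmin e0 (Cmod z0)).
  assert (He1 : 0 < e1 <= Cmod z0) by (split; [apply Rmin_pos; lra | apply Rmin_r]).
  assert (He1' : e1 <= e0) by apply Rmin_l.
  destruct (annulus_max schwarz_quotient e1 R1) as [w [Hw Hmax]]; [lra| |].
  { intros z Hz. eapply cderiv_ccont, schwarz_quotient_regular. lra. }
  set (Mx := Cmod (schwarz_quotient w)).
  assert (HLM : L <= Mx) by (apply Hmax; lra).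
  assert (HwR1 : Cmod w < R1).
  { destruct (Rle_lt_or_eq_dec _ _ (proj2 Hw)) as [Hlt|Heq]; auto.
    pose proof (schwarz_quotient_on_circle R1 w ltac:(lra) Heq) as Hc. fold Mx in Hc. lra. }
  assert (Hbound : forall z, 0 < Cmod z <= R1 -> Cmod (schwarz_quotient z) <= Mx).
  { intros z Hz. destruct (Rlt_or_le (Cmod z) e1) as [Hlt|Hge].
    - assert (Cmod (schwarz_quotient z) < 1) by (apply Hnear; lra). lra.
    - apply Hmax. lra. }
  (* so |G| = Mx > 1 along the segment (0, w], in particular at |z| = e1/2 *)
  pose proof (max_along_ray schwarz_quotient schwarz_quotient_deriv w R1 Mx
                schwarz_quotient_regular ltac:(lra) ltac:(lra) Hbound eq_refl
                (e1 / (2 * Cmod w))) as Hray.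
  assert (Hsmall : Cmod (schwarz_quotient (RtoC (e1 / (2 * Cmod w)) * w)%C) < 1).
  { apply Hnear. rewrite Cmod_mult, Cmod_R, Rabs_pos_eq by (apply Rlt_le, Rdiv_lt_0_compat; lra).
    replace (e1 / (2 * Cmod w) * Cmod w) with (e1 / 2) by (field; lra). lra. }
  rewrite Hray in Hsmall; [lra|]. split; [apply Rdiv_lt_0_compat; lra|].
  apply (Rmult_le_reg_r (2 * Cmod w)); [lra|].
  unfold Rdiv. rewrite Rmult_assoc, Rinv_l by lra. lra.
Qed.

(* Strict maximum principle: |G| < 1, since |G z0| = 1 would propagate to 0. *)
Lemma schwarz_quotient_lt_1 z0 : 0 < Cmod z0 < 1 -> Cmod (schwarz_quotient z0) < 1.
Proof.
  intros Hz0. destruct (Rlt_or_le (Cmod (schwarz_quotient z0)) 1) as [|Hge]; auto. exfalso.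
  destruct schwarz_quotient_near_zero as [e0 [He0 Hnear]].
  assert (HM : Cmod (schwarz_quotient z0) = 1) by (pose proof (schwarz_quotient_le_1 z0 Hz0); lra).
  set (R1 := (Cmod z0 + 1) / 2).
  set (t := Rmin 1 (e0 / Cmod z0)).
  assert (Ht : 0 < t <= 1)
    by (split; [apply Rmin_pos; [lra|apply Rdiv_lt_0_compat; lra]|apply Rmin_l]).
  pose proof (max_along_ray schwarz_quotient schwarz_quotient_deriv z0 R1 1
                schwarz_quotient_regular ltac:(unfold R1; lra) ltac:(unfold R1; lra)
                ltac:(intros z Hz; apply schwarz_quotient_le_1; unfold R1 in Hz; lra) HM t Ht)
    as Hray.
  assert (Hsmall : Cmod (schwarz_quotient (RtoC t * z0)%C) < 1).
  { apply Hnear. rewrite Cmod_mult, Cmod_R, Rabs_pos_eq by lra. split; [nra|].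
    assert (Ht2 : t <= e0 / Cmod z0) by apply Rmin_r.
    apply (Rmult_le_compat_r (Cmod z0)) in Ht2; [|lra]. unfold Rdiv in Ht2.
    rewrite Rmult_assoc, Rinv_l, Rmult_1_r in Ht2 by lra. lra. }
  lra.
Qed.

Lemma schwarz_strict z : 0 < Cmod z < 1 -> Cmod (phi z) < Cmod z.
Proof.
  intros Hz. pose proof (schwarz_quotient_lt_1 z Hz) as HG.
  rewrite schwarz_quotient_modulus in HG by (apply nonzero_of_Cmod_pos; lra).
  apply Rnot_le_lt. intro Hle.
  assert (Cmod z ^ n <= Cmod (phi z) ^ n) by (apply pow_incr; split; [apply Cmod_ge_0|]; lra).
  assert (0 < Cmod z ^ n) by (apply pow_lt; lra).
  assert (1 <= Cmod (phi z) ^ n / Cmod z ^ n); [|lra].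
  apply (Rmult_le_reg_r (Cmod z ^ n)); auto. unfold Rdiv. rewrite Rmult_assoc, Rinv_l by lra. lra.
Qed.

End Schwarz.

Lemma exp_pow_nat a n : exp a ^ n = exp (INR n * a).
Proof.
  induction n.
  - simpl. rewrite Rmult_0_l, exp_0. reflexivity.
  - rewrite S_INR. simpl. rewrite IHn, <- exp_plus. f_equal. ring.
Qed.

Lemma decay_exponential_form q m n : 0 < q ->
  q ^ n / exp (- (1/2)) ^ m = exp (- (1/2) * ((1 + (- 2 * ln q - 1)) * INR n - INR m)).
Proof.
  intros Hq. unfold Rdiv. rewrite <- (exp_ln q) at 1 by lra.
  rewrite !exp_pow_nat, <- exp_Ropp, <- exp_plus. apply (f_equal exp). field.
Qed.

Lemma taylor_coef_bound (phi : C -> C) q r0 m n c : 0 < r0 < 1 -> 0 <= q ->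
  ((1 <= n)%nat -> forall z, Cmod z = r0 -> Cmod (phi z) <= q) ->
  is_taylor_coef (fun z => cpow (phi z) n) m c -> Cmod c <= q ^ n / r0 ^ m.
Proof.
  intros Hr Hq Hb [g [Hg0 [Hg Hc]]]. rewrite Hc. apply cauchy_estimate; auto.
  intros z Hz. rewrite Hg0, Cmod_cpow. destruct n as [|n'].
  - simpl. lra.
  - apply pow_incr. split; [apply Cmod_ge_0|]. apply Hb; auto. lia.
Qed.

(* As soon as some power phi^n (n >= 1) has a Taylor coefficient, hence a
   derivative tower, the strict Schwarz lemma and compactness of the circle
   give |phi| <= q < r0 on |z| = r0. *)
Lemma circle_bound_below_radius (phi : C -> C) (d : C) r0 :
  holo_on_disk phi -> (forall z, in_disk z -> in_disk (phi z)) -> phi (RtoC 0) = RtoC 0 ->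
  cderiv_at phi (RtoC 0) d -> Cmod d < 1 -> 0 < r0 < 1 ->
  (exists n m c, (1 <= n)%nat /\ is_taylor_coef (fun z => cpow (phi z) n) m c) ->
  exists q, 0 < q < r0 /\ forall z, Cmod z = r0 -> Cmod (phi z) <= q.
Proof.
  intros Hhol Hmaps Hphi0 Hd Hdl Hr0 [n [m [c [Hn [g [Hg0 [Hg _]]]]]]].
  assert (Hcont : forall th, continuity_pt (fun th => Cmod (phi (RtoC r0 * cis th)%C)) th).
  { intros th. apply curve_cont_Cmod, (curve_cont_comp phi (fun th => RtoC r0 * cis th)%C).
    - destruct (Hhol (RtoC r0 * cis th)%C) as [l Hl];
        [unfold in_disk; rewrite Cmod_polar_point; lra|].
      eapply cderiv_ccont; eauto.
    - intros eps He. destruct (curve_cont_circle (RtoC 0) r0 th eps He) as [dl [Hdl0 Hs]].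
      exists dl. split; auto. intros s Hst. specialize (Hs s Hst).
      replace (RtoC r0 * cis s - RtoC r0 * cis th)%C
        with (RtoC 0 + RtoC r0 * cis s - (RtoC 0 + RtoC r0 * cis th))%C by ring. exact Hs. }
  destruct (continuity_ab_maj (fun th => Cmod (phi (RtoC r0 * cis th)%C)) (- PI) PI)
    as [thm [Hthm Hthm2]]; [pose proof PI_RGT_0; lra|intros; apply Hcont|].
  set (qmax := Cmod (phi (RtoC r0 * cis thm)%C)).
  assert (Hqmax : qmax < r0).
  { pose proof (schwarz_strict phi g n d Hmaps Hphi0 Hd Hdl Hn Hg Hg0 (RtoC r0 * cis thm)%C)
      as Hs.
    rewrite Cmod_polar_point in Hs by lra. apply Hs. lra. }
  assert (Hq0 : 0 <= qmax) by apply Cmod_ge_0.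
  exists ((qmax + r0) / 2). split; [lra|].
  intros z Hz. destruct (polar_form z) as [th [Hth Ez]].
  - apply (proj2 (Cmod_gt_0 _)). lra.
  - rewrite Ez, Hz. specialize (Hthm th Hth). cbv beta in Hthm. fold qmax in Hthm. lra.
Qed.

Theorem mainTheorem10 (phi : C -> C)
  (Hhol : holo_on_disk phi)
  (Hmaps : forall z, in_disk z -> in_disk (phi z))
  (H0 : phi (RtoC 0) = RtoC 0)
  (Hd : exists d, cderiv_at phi (RtoC 0) d /\ Cmod d < 1) :
  exists rho : R, 0 < rho /\
    forall (m n : nat) (c : C),
      is_taylor_coef (fun z => cpow (phi z) n) m c ->
      Cmod c <= exp (- (1/2) * ((1 + rho) * INR n - INR m)).
Proof.
  destruct Hd as [d [Hd Hdl]].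
  set (r0 := exp (- (1/2))).
  assert (Hr0 : 0 < r0 < 1).
  { split; [apply exp_pos|]. rewrite <- exp_0. apply exp_increasing. lra. }
  assert (Hq : exists q, 0 < q < r0 /\ forall m n c,
             is_taylor_coef (fun z => cpow (phi z) n) m c -> Cmod c <= q ^ n / r0 ^ m).
  { destruct (classic (exists n m c, (1 <= n)%nat /\ is_taylor_coef (fun z => cpow (phi z) n) m c))
      as [Hex|Hno].
    - destruct (circle_bound_below_radius phi d r0 Hhol Hmaps H0 Hd Hdl Hr0 Hex) as [q [Hq Hb]].
      exists q. split; auto. intros m n c. apply taylor_coef_bound; auto; lra.
    - exists (r0 / 2). split; [lra|]. intros m n c Hc.
      apply (taylor_coef_bound phi); auto; try lra.
      intros Hn. exfalso. apply Hno. exists n, m, c. auto. }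
  destruct Hq as [q [Hq Hbound]].
  exists (- 2 * ln q - 1). split.
  - assert (ln q < ln r0) by (apply ln_increasing; lra).
    unfold r0 in *. rewrite ln_exp in *. lra.
  - intros m n c Hc. rewrite <- decay_exponential_form by lra. apply Hbound, Hc.
Qed.
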